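(* Assume the setting below, on the A-mesh $S_{1/\varepsilon}$ (i.e. $\lambda=\varepsilon^{-1}$) with mesh parameter $a>3$. There exist $N_0$ and $C$, both independent of $\varepsilon$, such that for all $N\ge N_0$, \[ |\tau_i[y]|\le C\begin{cases} (\ln\varepsilon)^2N^{-2}, & 1\le i\le J-1,\\ \min\{\varepsilon,N^{-1}\}N^{-1}+\varepsilon^2N^{-1}, & i=J,\\ \min\{\varepsilon,N^{-1}\}N^{-1}, & J+1\le i\le N-1.\end{cases} \]
   Context: Let $0<\varepsilon<1$. Let $b,c,f\in C^4[0,1]$, and let $\beta$ be a constant with $b(x)>\beta>0$ and $c(x)\ge0$ on $[0,1]$. Let $u$ be the solution of $-\varepsilon u''-bu'+cu=f$ on $(0,1)$ with $u(0)=u(1)=0$. Let $u_0$ be the solution of $-bu_0'+cu_0=f$ on $(0,1)$ with $u_0(1)=0$. Set $w=u-u_0$, $v(x)=-\frac{\varepsilon u'(0)}{b(0)}e^{-b(0)x/\varepsilon}$ and $y=w-v$. Mesh $S_\lambda$, $\lambda\in\{N,\varepsilon^{-1}\}$. $N$ is a positive integer. $Q\in(0,1)$ is a fixed rational with $J=QN$ an integer, and $a>0$. Set $\xi=(a\varepsilon/\beta)\ln\lambda$, assumed $\le Q$, and $h=\xi/J$, $H=(1-\xi)/(N-J)$. The mesh points are $x_i=ih$ ($0\le i\le J$) and $x_i=\xi+(i-J)H$ ($J\le i\le N$). Write $h_i=x_i-x_{i-1}$ and $\hbar_i=(h_i+h_{i+1})/2$. Define $D^+g(x_i)=(g(x_{i+1})-g(x_i))/h_{i+1}$,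 $D^-g(x_i)=(g(x_i)-g(x_{i-1}))/h_i$, $D''g(x_i)=(D^+g(x_i)-D^-g(x_i))/\hbar_i$. Let $\sigma(\rho)=2\rho/(e^{2\rho}-1)$ for $\rho>0$, $\sigma(0)=1$, and $\rho_i=b(x_i)h_{i+1}/(2\varepsilon)$. The truncation error of the ASI scheme is $\tau_i[g]=-\varepsilon\sigma(\rho_i)D''g(x_i)-b(x_i)D^+g(x_i)+\varepsilon g''(x_i)+b(x_i)g'(x_i)$ for $1\le i\le N-1$. *)

From Stdlib Require Import Reals Lra.
From Coquelicot Require Import Coquelicot.
Open Scope R_scope.

Definition CkR (k : nat) (g : R -> R) : Prop :=
  (forall j x, (j <= k)%nat -> ex_derive_n g j x) /\
  (forall x, continuous (Derive_n g k) x).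

Definition xi_tr (a eps beta lam : R) : R := (a * eps / beta) * ln lam.

Definition mesh (xi : R) (N J : nat) (i : nat) : R :=
  if (i <=? J)%nat then INR i * (xi / INR J)
  else xi + INR (i - J) * ((1 - xi) / INR (N - J)).

(* h_i = x_i - x_{i-1} (used for i >= 1) *)
Definition hs (x : nat -> R) (i : nat) : R := x i - x (i - 1)%nat.
Definition hbar (x : nat -> R) (i : nat) : R := (hs x i + hs x (S i)) / 2.

Definition Dp (x : nat -> R) (g : R -> R) (i : nat) : R :=
  (g (x (S i)) - g (x i)) / hs x (S i).
Definition Dm (x : nat -> R) (g : R -> R) (i : nat) : R :=
  (g (x i) - g (x (i - 1)%nat)) / hs x i.
Definition D2 (x : nat -> R) (g : R -> R) (i : nat) : R :=
  (Dp x g i - Dm x g i) / hbar x i.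

Definition sigma (rho : R) : R :=
  if Rlt_dec 0 rho then 2 * rho / (exp (2 * rho) - 1) else 1.

Definition tau (eps : R) (b : R -> R) (x : nat -> R) (g : R -> R) (i : nat) : R :=
  let rho := b (x i) * hs x (S i) / (2 * eps) in
  - eps * sigma rho * D2 x g i - b (x i) * Dp x g i
  + eps * Derive_n g 2 (x i) + b (x i) * Derive g (x i).

From Pilot Require Import Defs.
From Stdlib Require Import Reals Lra Psatz Lia.
From Coquelicot Require Import Coquelicot.
Open Scope R_scope.

(* Write L = -eps d^2 - b d + c.  Barrier arguments for L (maximum principle)
   and for the first-order operator eps d + b give |u0^(k)| <= C and |u - u0| <= C (eps +
   exp (-beta x / eps)); integrating the equation once shows eps u'(0) = b(0) u0(0) + O(eps),
   so v removes the layer and y = u - u0 - v solves L y = g with |g| <= C (eps + exp (-beta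
   x / eps)).  The first-order barrier applied to y', y'' and y''' then yields
   |y^(k)| <= C (eps + eps^(1-k) exp (-beta x / eps)).  At a mesh point, Taylor expansion and
   sigma(rho) = 1 - rho + O(rho^2) bound the truncation error by C (h / eps)^2 on the fine
   part of the mesh, which is C (ln eps / N)^2 there.  Beyond the transition point the layer
   term is below eps^3 because a > 3, so y'' = O(eps) and y^(4) = O(1): this gives C eps / N
   when eps <= 1/N and C / N^2 otherwise, plus eps^2 / N at the transition point, where
   the mesh is not uniform. *)

Lemma is_derive_continuity_pt f x l : is_derive f x l -> continuity_pt f x.
Proof.
  intro H. apply continuity_pt_filterlim.
  apply (ex_derive_continuous f x). exists l; exact H.
Qed.

Lemma MVT_is_derive f df a b : a < b ->
  (forall x, a < x < b -> is_derive f x (df x)) ->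
  (forall x, a <= x <= b -> continuity_pt f x) ->
  exists c, a < c < b /\ f b - f a = df c * (b - a).
Proof.
  intros Hab Hd Hc.
  assert (pr1 : forall c, a < c < b -> derivable_pt f c).
  { intros c Pc. exists (df c). apply is_derive_Reals. apply Hd; exact Pc. }
  assert (pr2 : forall c, a < c < b -> derivable_pt id c).
  { intros c Pc. apply derivable_pt_id. }
  destruct (MVT f id a b pr1 pr2 Hab Hc) as [c [P HP]].
  { intros; apply derivable_continuous_pt; apply derivable_pt_id. }
  exists c; split; [exact P|].
  assert (E1 : derive_pt f c (pr1 c P) = df c).
  { apply derive_pt_eq_0. apply is_derive_Reals. apply Hd; exact P. }
  assert (E2 : derive_pt id c (pr2 c P) = 1).
  { apply derive_pt_eq_0. apply derivable_pt_lim_id. }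
  rewrite E1, E2 in HP. unfold id in HP. lra.
Qed.

Lemma Rabs_increment_le F dF G dG a b : a <= b ->
  (forall x, a < x < b -> is_derive F x (dF x)) ->
  (forall x, a < x < b -> is_derive G x (dG x)) ->
  (forall x, a <= x <= b -> continuity_pt F x) ->
  (forall x, a <= x <= b -> continuity_pt G x) ->
  (forall x, a < x < b -> Rabs (dF x) <= dG x) ->
  Rabs (F b - F a) <= G b - G a.
Proof.
  intros Hab HF HG cF cG Hb.
  destruct (Req_dec a b) as [E|Hne].
  { subst. replace (F b - F b) with 0 by ring. rewrite Rabs_R0. lra. }
  assert (Hlt : a < b) by lra.
  destruct (MVT_is_derive (fun x => G x - F x) (fun x => dG x - dF x) a b Hlt) as [c1 [P1 E1]].
  { intros x Px. apply (is_derive_minus G F); auto. }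
  { intros x Px. apply continuity_pt_minus; auto. }
  destruct (MVT_is_derive (fun x => G x + F x) (fun x => dG x + dF x) a b Hlt) as [c2 [P2 E2]].
  { intros x Px. apply (is_derive_plus G F); auto. }
  { intros x Px. apply continuity_pt_plus; auto. }
  specialize (Hb c1 P1) as B1. specialize (Hb c2 P2) as B2.
  apply Rabs_le_between in B1. apply Rabs_le_between in B2.
  apply Rabs_le. split; nra.
Qed.

Ltac rewrite_Derive := repeat match goal with
 | H : is_derive ?g ?s ?l |- context [Derive ?f ?s] =>
     rewrite (is_derive_unique f s l H)
 end.
Ltac solve_ex_derive := repeat match goal with
 | |- _ /\ _ => split
 | |- True => exact I
 | H : is_derive ?g ?s ?l |- ex_derive ?f ?s => exists l; exact H
 | |- _ <> _ => let H := fresh in intro H; lra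
 end.
Ltac auto_derive_hyps := auto_derive; [solve_ex_derive | rewrite_Derive].

Lemma is_derive_quotient_sign q t l : is_derive q t l -> l <> 0 ->
  exists d, 0 < d /\ forall h, h <> 0 -> Rabs h < d ->
     0 < (q (t + h) - q t) / h * l.
Proof.
  intros H Hl. apply is_derive_Reals in H.
  assert (He : 0 < Rabs l / 2) by (apply Rabs_pos_lt in Hl; lra).
  destruct (H _ He) as [d Hd].
  exists d; split; [apply cond_pos|].
  intros h Hh Hhd. specialize (Hd h Hh Hhd).
  apply Rabs_def2 in Hd. destruct Hd as [A B].
  destruct (Rlt_dec 0 l) as [Lp|Ln].
  - rewrite Rabs_pos_eq in A, B by lra. nra.
  - rewrite Rabs_left in A, B by lra. nra.
Qed.

Lemma is_derive_neg_left q t l : is_derive q t l -> l < 0 ->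
  exists d, 0 < d /\ forall s, t - d < s < t -> q t < q s.
Proof.
  intros H Hl. destruct (is_derive_quotient_sign q t l H) as [d [Hd P]]; [lra|].
  exists d; split; auto. intros s Hs.
  specialize (P (s - t)). replace (t + (s - t)) with s in P by ring.
  assert (Q0 : 0 < (q s - q t) / (s - t) * l) by (apply P; [lra| rewrite Rabs_left; lra]).
  assert (Q1 : (q s - q t) / (s - t) < 0) by nra.
  unfold Rdiv in Q1.
  assert (0 < / (s - t) * -1) by (assert (/ (s-t) < 0) by (apply Rinv_lt_0_compat; lra); lra).
  destruct (Rle_dec (q s) (q t)) as [Hle|]; [|lra].
  assert (0 <= (q s - q t) * / (s - t)).
  { replace ((q s - q t) * / (s - t)) with ((q t - q s) * (/ (s - t) * -1)) by ring.
    apply Rmult_le_pos; lra. }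
  lra.
Qed.

Lemma is_derive_neg_right q t l : is_derive q t l -> l < 0 ->
  exists d, 0 < d /\ forall s, t < s < t + d -> q s < q t.
Proof.
  intros H Hl. destruct (is_derive_quotient_sign q t l H) as [d [Hd P]]; [lra|].
  exists d; split; auto. intros s Hs.
  specialize (P (s - t)). replace (t + (s - t)) with s in P by ring.
  assert (Q0 : 0 < (q s - q t) / (s - t) * l) by (apply P; [lra| rewrite Rabs_pos_eq; lra]).
  assert (Q1 : (q s - q t) / (s - t) < 0) by nra.
  unfold Rdiv in Q1.
  assert (0 < / (s - t)) by (apply Rinv_0_lt_compat; lra).
  destruct (Rle_dec (q t) (q s)) as [Hle|]; [|lra].
  assert (0 <= (q s - q t) * / (s - t)) by (apply Rmult_le_pos; lra).
  lra.
Qed.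

Lemma is_derive_pos_left q t l : is_derive q t l -> 0 < l ->
  exists d, 0 < d /\ forall s, t - d < s < t -> q s < q t.
Proof.
  intros H Hl.
  destruct (is_derive_neg_left (fun x => - q x) t (- l)) as [d [Hd P]].
  { apply (is_derive_opp q); exact H. } { lra. }
  exists d; split; auto. intros s Hs; specialize (P s Hs); lra.
Qed.

Lemma is_derive_pos_right q t l : is_derive q t l -> 0 < l ->
  exists d, 0 < d /\ forall s, t < s < t + d -> q t < q s.
Proof.
  intros H Hl.
  destruct (is_derive_neg_right (fun x => - q x) t (- l)) as [d [Hd P]].
  { apply (is_derive_opp q); exact H. } { lra. }
  exists d; split; auto. intros s Hs; specialize (P s Hs); lra.
Qed.

Lemma derive_zero_at_interior_min (w : R -> R) m l : 0 < m < 1 -> is_derive w m l ->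
  (forall x, 0 <= x <= 1 -> w m <= w x) -> l = 0.
Proof.
  intros Im Hd Hm.
  destruct (Rtotal_order l 0) as [Hl|[Hl|Hl]]; auto; exfalso.
  - destruct (is_derive_neg_right w m _ Hd Hl) as [d [Hd0 P]].
    pose proof (Rmin_r d (1 - m)). pose proof (Rmin_l d (1 - m)).
    assert (0 < Rmin d (1 - m)) by (apply Rmin_pos; lra).
    specialize (P (m + Rmin d (1 - m) / 2) ltac:(lra)).
    specialize (Hm (m + Rmin d (1 - m) / 2) ltac:(lra)). lra.
  - destruct (is_derive_pos_left w m _ Hd Hl) as [d [Hd0 P]].
    pose proof (Rmin_r d m). pose proof (Rmin_l d m).
    assert (0 < Rmin d m) by (apply Rmin_pos; lra).
    specialize (P (m - Rmin d m / 2) ltac:(lra)). specialize (Hm (m - Rmin d m / 2) ltac:(lra)). lra.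
Qed.

Lemma second_derive_nonneg_at_interior_min (w w1 : R -> R) m l : 0 < m < 1 ->
  (forall x, 0 <= x <= 1 -> continuity_pt w x) ->
  (forall x, 0 < x < 1 -> is_derive w x (w1 x)) -> w1 m = 0 -> is_derive w1 m l ->
  (forall x, 0 <= x <= 1 -> w m <= w x) -> 0 <= l.
Proof.
  intros Im Hcont Hd1 E1 Hd2 Hm.
  destruct (Rle_dec 0 l) as [|Hl]; auto. exfalso.
  destruct (is_derive_neg_left w1 m _ Hd2 ltac:(lra)) as [d [Hd P]].
  pose proof (Rmin_r d m). pose proof (Rmin_l d m).
  assert (0 < Rmin d m) by (apply Rmin_pos; lra).
  set (s := m - Rmin d m / 2).
  destruct (MVT_is_derive w w1 s m ltac:(unfold s; lra)) as [c0 [Pc Ec]].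
  { intros y Hy. apply Hd1. unfold s in Hy; lra. }
  { intros y Hy. apply Hcont. unfold s in Hy; lra. }
  assert (0 < w1 c0) by (rewrite <- E1; apply P; unfold s in Pc; lra).
  specialize (Hm s ltac:(unfold s; lra)).
  assert (0 < w1 c0 * (m - s)) by (apply Rmult_lt_0_compat; lra). lra.
Qed.

Lemma maximum_principle eps (b c w w1 w2 : R -> R) : 0 < eps ->
  (forall x, 0 < x < 1 -> 0 <= c x) ->
  (forall x, 0 <= x <= 1 -> continuity_pt w x) ->
  (forall x, 0 < x < 1 -> is_derive w x (w1 x)) ->
  (forall x, 0 < x < 1 -> is_derive w1 x (w2 x)) ->
  (forall x, 0 < x < 1 -> 0 < - eps * w2 x - b x * w1 x + c x * w x) ->
  0 <= w 0 -> 0 <= w 1 -> forall x, 0 <= x <= 1 -> 0 <= w x.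
Proof.
  intros He Hc Hcont Hd1 Hd2 HL H0 H1 x Hx.
  destruct (continuity_ab_min w 0 1 ltac:(lra) Hcont) as [m [Hm Pm]].
  destruct (Rle_dec 0 (w x)) as [|Hneg]; [auto|exfalso].
  assert (wm : w m < 0) by (specialize (Hm x Hx); lra).
  assert (Im : 0 < m < 1) by (split; destruct (Req_dec m 0); destruct (Req_dec m 1); subst; lra).
  assert (E1 : w1 m = 0) by exact (derive_zero_at_interior_min w m _ Im (Hd1 m Im) Hm).
  pose proof (second_derive_nonneg_at_interior_min w w1 m _ Im Hcont Hd1 E1 (Hd2 m Im) Hm).
  specialize (HL m Im). rewrite E1 in HL. specialize (Hc m Im).
  assert (0 <= eps * w2 m) by (apply Rmult_le_pos; lra).
  assert (c m * w m <= 0) by nra.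
  lra.
Qed.

Lemma barrier_bound eps (b c w w1 w2 p p1 p2 : R -> R) : 0 < eps ->
  (forall x, 0 < x < 1 -> 0 <= c x) ->
  (forall x, 0 <= x <= 1 -> continuity_pt w x) ->
  (forall x, 0 <= x <= 1 -> continuity_pt p x) ->
  (forall x, 0 < x < 1 -> is_derive w x (w1 x)) -> (forall x, 0 < x < 1 -> is_derive w1 x (w2 x)) ->
  (forall x, 0 < x < 1 -> is_derive p x (p1 x)) -> (forall x, 0 < x < 1 -> is_derive p1 x (p2 x)) ->
  (forall x, 0 < x < 1 ->
     Rabs (- eps * w2 x - b x * w1 x + c x * w x) < - eps * p2 x - b x * p1 x + c x * p x) ->
  Rabs (w 0) <= p 0 -> Rabs (w 1) <= p 1 ->
  forall x, 0 <= x <= 1 -> Rabs (w x) <= p x.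
Proof.
  intros He Hc Cw Cp Dw1 Dw2 Dp1 Dp2 HL H0 H1.
  assert (key : forall s, s = 1 \/ s = -1 -> forall x, 0 <= x <= 1 -> 0 <= p x - s * w x).
  { intros s Hs.
    apply (maximum_principle eps b c (fun x => p x - s * w x) (fun x => p1 x - s * w1 x)
      (fun x => p2 x - s * w2 x)); auto.
    - intros x Hx. apply continuity_pt_minus; auto.
      apply continuity_pt_mult; [apply continuity_pt_const; intros ??; auto|auto].
    - intros x Hx. pose proof (Dw1 x Hx). pose proof (Dp1 x Hx). auto_derive_hyps. ring.
    - intros x Hx. pose proof (Dw2 x Hx). pose proof (Dp2 x Hx). auto_derive_hyps. ring.
    - intros x Hx. specialize (HL x Hx). apply Rabs_def2 in HL.
      replace (- eps * (p2 x - s * w2 x) - b x * (p1 x - s * w1 x) + c x * (p x - s * w x)) with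
        ((- eps * p2 x - b x * p1 x + c x * p x) - s * (- eps * w2 x - b x * w1 x + c x * w x)) by ring.
      destruct Hs; subst s; lra.
    - apply Rabs_le_between in H0. destruct Hs; subst s; lra.
    - apply Rabs_le_between in H1. destruct Hs; subst s; lra. }
  intros x Hx. pose proof (key 1 (or_introl eq_refl) x Hx). pose proof (key (-1) (or_intror eq_refl) x Hx).
  apply Rabs_le. lra.
Qed.

Lemma nonpos_propagates_right (q dq : R -> R) x0 x1 : x0 <= x1 ->
  (forall t, x0 <= t <= x1 -> continuity_pt q t) ->
  (forall t, x0 < t <= x1 -> is_derive q t (dq t)) ->
  q x0 <= 0 ->
  (forall t, x0 < t <= x1 -> 0 < q t -> dq t < 0) ->
  q x1 <= 0.
Proof.
  intros Hx Hc Hd H0 Hs.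
  destruct (continuity_ab_maj q x0 x1 Hx Hc) as [m [Hm Pm]].
  destruct (Rle_dec (q x1) 0) as [|Hp]; [auto|exfalso].
  assert (qm : 0 < q m) by (specialize (Hm x1 ltac:(lra)); lra).
  assert (Im : x0 < m <= x1) by (destruct (Req_dec m x0); subst; lra).
  destruct (is_derive_neg_left q m _ (Hd m Im) (Hs m Im qm)) as [d [Hd0 P]].
  pose proof (Rmin_r d (m - x0)). pose proof (Rmin_l d (m - x0)).
  assert (0 < Rmin d (m - x0)) by (apply Rmin_pos; lra).
  specialize (P (m - Rmin d (m - x0) / 2) ltac:(lra)).
  specialize (Hm (m - Rmin d (m - x0) / 2) ltac:(lra)). lra.
Qed.

Lemma nonpos_propagates_left (q dq : R -> R) x0 x1 : x0 <= x1 ->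
  (forall t, x0 <= t <= x1 -> continuity_pt q t) ->
  (forall t, x0 <= t < x1 -> is_derive q t (dq t)) ->
  q x1 <= 0 ->
  (forall t, x0 <= t < x1 -> 0 < q t -> 0 < dq t) ->
  q x0 <= 0.
Proof.
  intros Hx Hc Hd H0 Hs.
  destruct (continuity_ab_maj q x0 x1 Hx Hc) as [m [Hm Pm]].
  destruct (Rle_dec (q x0) 0) as [|Hp]; [auto|exfalso].
  assert (qm : 0 < q m) by (specialize (Hm x0 ltac:(lra)); lra).
  assert (Im : x0 <= m < x1) by (destruct (Req_dec m x1); subst; lra).
  destruct (is_derive_pos_right q m _ (Hd m Im) (Hs m Im qm)) as [d [Hd0 P]].
  pose proof (Rmin_r d (x1 - m)). pose proof (Rmin_l d (x1 - m)).
  assert (0 < Rmin d (x1 - m)) by (apply Rmin_pos; lra).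
  specialize (P (m + Rmin d (x1 - m) / 2) ltac:(lra)).
  specialize (Hm (m + Rmin d (x1 - m) / 2) ltac:(lra)). lra.
Qed.

Lemma nonpos_at_0_of_continuity (q : R -> R) : continuity_pt q 0 ->
  (forall x, 0 < x < 1 -> q x <= 0) -> q 0 <= 0.
Proof.
  intros Hc H. destruct (Rle_dec (q 0) 0) as [|Hp]; [auto|exfalso].
  destruct (Hc (q 0 / 2) ltac:(lra)) as [al [Hal P]].
  set (x := Rmin al 1 / 2).
  assert (0 < Rmin al 1) by (apply Rmin_pos; lra).
  pose proof (Rmin_r al 1). pose proof (Rmin_l al 1).
  specialize (P x). simpl in P. unfold R_dist, D_x, no_cond in P.
  assert (A : Rabs (q x - q 0) < q 0 / 2).
  { apply P. split. split; [auto| unfold x; lra]. unfold x. rewrite Rminus_0_r, Rabs_pos_eq; lra. }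
  specialize (H x ltac:(unfold x; lra)). apply Rabs_def2 in A. lra.
Qed.

Lemma locally_01 (P : R -> Prop) x : 0 < x < 1 -> (forall t, 0 < t < 1 -> P t) -> locally x P.
Proof.
  intros Hx HP. apply (locally_open (fun t => 0 < t /\ t < 1)); auto.
  apply open_and; [apply open_gt|apply open_lt].
Qed.

Lemma eq_at_0_of_continuity (p q : R -> R) : continuity_pt p 0 -> continuity_pt q 0 ->
  (forall x, 0 < x < 1 -> p x = q x) -> p 0 = q 0.
Proof.
  intros Hp Hq H.
  assert (A : (fun x => p x - q x) 0 <= 0).
  { apply (nonpos_at_0_of_continuity (fun x => p x - q x)). apply continuity_pt_minus; auto. intros x Hx; simpl; rewrite H; auto; lra. }
  assert (B : (fun x => q x - p x) 0 <= 0).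
  { apply (nonpos_at_0_of_continuity (fun x => q x - p x)). apply continuity_pt_minus; auto. intros x Hx; simpl; rewrite H; auto; lra. }
  simpl in A, B. lra.
Qed.

Lemma taylor_remainder1 (g g1 : R -> R) x t M : 0 < t ->
  (forall s, x <= s < x + t -> is_derive g s (g1 s)) ->
  continuity_pt g (x + t) ->
  (forall s, x < s < x + t -> Rabs (g1 s) <= M) ->
  Rabs (g (x + t) - g x) <= M * t.
Proof.
  intros Ht Hd Hc HM.
  replace (M * t) with (M * (x + t) - M * x) by ring.
  apply (Rabs_increment_le g g1 (fun s => M * s) (fun _ => M)); try lra.
  - intros; apply Hd; lra.
  - intros s Hs. auto_derive_hyps. ring.
  - intros s Hs. destruct (Req_dec s (x + t)) as [E|E]; [subst; auto|].
    apply (is_derive_continuity_pt _ _ (g1 s)); apply Hd; lra.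
  - intros; apply continuity_pt_mult; [apply continuity_pt_const; intros ??; auto|apply continuity_pt_id].
  - auto.
Qed.

Lemma taylor_remainder2 (g g1 g2 : R -> R) x t M : 0 < t ->
  (forall s, x <= s < x + t -> is_derive g s (g1 s)) ->
  (forall s, x <= s < x + t -> is_derive g1 s (g2 s)) ->
  continuity_pt g (x + t) ->
  (forall s, x < s < x + t -> Rabs (g2 s) <= M) ->
  Rabs (g (x + t) - g x - t * g1 x) <= M * t ^ 2 / 2.
Proof.
  intros Ht Hd1 Hd2 Hc HM.
  assert (L1 : forall s, x < s < x + t -> Rabs (g1 s - g1 x) <= M * (s - x)).
  { intros s Hs. replace s with (x + (s - x)) at 1 by ring.
    apply (taylor_remainder1 g1 g2); try lra.
    - intros; apply Hd2; lra.
    - replace (x + (s - x)) with s by ring. apply (is_derive_continuity_pt _ _ (g2 s)); apply Hd2; lra.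
    - intros; apply HM; lra. }
  replace (g (x + t) - g x - t * g1 x) with
    ((fun s => g s - s * g1 x) (x + t) - (fun s => g s - s * g1 x) x) by (simpl; ring).
  replace (M * t ^ 2 / 2) with ((fun s => M * (s - x) ^ 2 / 2) (x + t) - (fun s => M * (s - x) ^ 2 / 2) x) by (simpl; field).
  apply (Rabs_increment_le (fun s => g s - s * g1 x) (fun s => g1 s - g1 x) (fun s => M * (s - x) ^ 2 / 2) (fun s => M * (s - x))); try lra.
  - intros s Hs. specialize (Hd1 s ltac:(lra)). auto_derive_hyps. ring.
  - intros s Hs. auto_derive_hyps. field.
  - intros s Hs. apply continuity_pt_minus.
    + destruct (Req_dec s (x + t)) as [E|E]; [subst; auto|].
      apply (is_derive_continuity_pt _ _ (g1 s)); apply Hd1; lra.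
    + apply continuity_pt_mult; [apply continuity_pt_id|apply continuity_pt_const; intros ??; auto].
  - intros s Hs. apply (is_derive_continuity_pt _ _ (M * (s - x))). auto_derive_hyps. field.
  - intros s Hs. apply L1; auto.
Qed.

Lemma taylor_remainder3 (g g1 g2 g3 : R -> R) x t M : 0 < t ->
  (forall s, x <= s < x + t -> is_derive g s (g1 s)) ->
  (forall s, x <= s < x + t -> is_derive g1 s (g2 s)) ->
  (forall s, x <= s < x + t -> is_derive g2 s (g3 s)) ->
  continuity_pt g (x + t) ->
  (forall s, x < s < x + t -> Rabs (g3 s) <= M) ->
  Rabs (g (x + t) - g x - t * g1 x - t ^ 2 / 2 * g2 x) <= M * t ^ 3 / 6.
Proof.
  intros Ht Hd1 Hd2 Hd3 Hc HM.
  assert (L1 : forall s, x < s < x + t -> Rabs (g1 s - g1 x - (s - x) * g2 x) <= M * (s - x) ^ 2 / 2).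
  { intros s Hs. replace s with (x + (s - x)) at 1 by ring.
    apply (taylor_remainder2 g1 g2 g3); try lra.
    - intros; apply Hd2; lra.
    - intros; apply Hd3; lra.
    - replace (x + (s - x)) with s by ring. apply (is_derive_continuity_pt _ _ (g2 s)); apply Hd2; lra.
    - intros; apply HM; lra. }
  replace (g (x + t) - g x - t * g1 x - t ^ 2 / 2 * g2 x) with
    ((fun s => g s - s * g1 x - (s - x) ^ 2 / 2 * g2 x) (x + t) - (fun s => g s - s * g1 x - (s - x) ^ 2 / 2 * g2 x) x) by (simpl; field).
  replace (M * t ^ 3 / 6) with ((fun s => M * (s - x) ^ 3 / 6) (x + t) - (fun s => M * (s - x) ^ 3 / 6) x) by (simpl; field).
  apply (Rabs_increment_le (fun s => g s - s * g1 x - (s - x) ^ 2 / 2 * g2 x) (fun s => g1 s - g1 x - (s - x) * g2 x) (fun s => M * (s - x) ^ 3 / 6) (fun s => M * (s - x) ^ 2 / 2)); try lra.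
  - intros s Hs. specialize (Hd1 s ltac:(lra)). auto_derive_hyps. field.
  - intros s Hs. auto_derive_hyps. field.
  - intros s Hs. apply (continuity_pt_minus (fun s => g s - s * g1 x)).
    + apply continuity_pt_minus.
      * destruct (Req_dec s (x + t)) as [E|E]; [subst; auto|].
        apply (is_derive_continuity_pt _ _ (g1 s)); apply Hd1; lra.
      * apply continuity_pt_mult; [apply continuity_pt_id|apply continuity_pt_const; intros ??; auto].
    + apply (is_derive_continuity_pt _ _ ((s - x) * g2 x)). auto_derive_hyps. field.
  - intros s Hs. apply (is_derive_continuity_pt _ _ (M * (s - x) ^ 2 / 2)). auto_derive_hyps. field.
  - intros s Hs. apply L1; auto.
Qed.

Lemma taylor_remainder4 (g g1 g2 g3 g4 : R -> R) x t M : 0 < t ->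
  (forall s, x <= s < x + t -> is_derive g s (g1 s)) ->
  (forall s, x <= s < x + t -> is_derive g1 s (g2 s)) ->
  (forall s, x <= s < x + t -> is_derive g2 s (g3 s)) ->
  (forall s, x <= s < x + t -> is_derive g3 s (g4 s)) ->
  continuity_pt g (x + t) ->
  (forall s, x < s < x + t -> Rabs (g4 s) <= M) ->
  Rabs (g (x + t) - g x - t * g1 x - t ^ 2 / 2 * g2 x - t ^ 3 / 6 * g3 x) <= M * t ^ 4 / 24.
Proof.
  intros Ht Hd1 Hd2 Hd3 Hd4 Hc HM.
  assert (L1 : forall s, x < s < x + t -> Rabs (g1 s - g1 x - (s - x) * g2 x - (s - x) ^ 2 / 2 * g3 x) <= M * (s - x) ^ 3 / 6).
  { intros s Hs. replace s with (x + (s - x)) at 1 by ring.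
    apply (taylor_remainder3 g1 g2 g3 g4); try lra.
    - intros; apply Hd2; lra.
    - intros; apply Hd3; lra.
    - intros; apply Hd4; lra.
    - replace (x + (s - x)) with s by ring. apply (is_derive_continuity_pt _ _ (g2 s)); apply Hd2; lra.
    - intros; apply HM; lra. }
  replace (g (x + t) - g x - t * g1 x - t ^ 2 / 2 * g2 x - t ^ 3 / 6 * g3 x) with
    ((fun s => g s - s * g1 x - (s - x) ^ 2 / 2 * g2 x - (s - x) ^ 3 / 6 * g3 x) (x + t) - (fun s => g s - s * g1 x - (s - x) ^ 2 / 2 * g2 x - (s - x) ^ 3 / 6 * g3 x) x) by (simpl; field).
  replace (M * t ^ 4 / 24) with ((fun s => M * (s - x) ^ 4 / 24) (x + t) - (fun s => M * (s - x) ^ 4 / 24) x) by (simpl; field).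
  apply (Rabs_increment_le (fun s => g s - s * g1 x - (s - x) ^ 2 / 2 * g2 x - (s - x) ^ 3 / 6 * g3 x) (fun s => g1 s - g1 x - (s - x) * g2 x - (s - x) ^ 2 / 2 * g3 x) (fun s => M * (s - x) ^ 4 / 24) (fun s => M * (s - x) ^ 3 / 6)); try lra.
  - intros s Hs. specialize (Hd1 s ltac:(lra)). auto_derive_hyps. field.
  - intros s Hs. auto_derive_hyps. field.
  - intros s Hs. apply (continuity_pt_minus (fun s => g s - s * g1 x - (s - x) ^ 2 / 2 * g2 x)).
    + apply (continuity_pt_minus (fun s => g s - s * g1 x)).
      * apply continuity_pt_minus.
        -- destruct (Req_dec s (x + t)) as [E|E]; [subst; auto|].
           apply (is_derive_continuity_pt _ _ (g1 s)); apply Hd1; lra.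
        -- apply continuity_pt_mult; [apply continuity_pt_id|apply continuity_pt_const; intros ??; auto].
      * apply (is_derive_continuity_pt _ _ ((s - x) * g2 x)). auto_derive_hyps. field.
    + apply (is_derive_continuity_pt _ _ ((s - x) ^ 2 / 2 * g3 x)). auto_derive_hyps. field.
  - intros s Hs. apply (is_derive_continuity_pt _ _ (M * (s - x) ^ 3 / 6)). auto_derive_hyps. field.
  - intros s Hs. apply L1; auto.
Qed.

Lemma is_derive_reflect (g g1 : R -> R) s : is_derive g (- s) (g1 (- s)) ->
  is_derive (fun z => g (- z)) s (- g1 (- s)).
Proof.
  intro H. auto_derive. exists (g1 (-s)); exact H.
  rewrite_Derive. ring.
Qed.

Lemma continuity_pt_reflect (g : R -> R) s : continuity_pt g (- s) -> continuity_pt (fun z => g (- z)) s.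
Proof.
  intro H. apply (continuity_pt_comp Ropp g). apply continuity_pt_opp, continuity_pt_id. exact H.
Qed.

Lemma taylor_remainder2_left (g g1 g2 : R -> R) x t M : 0 < t ->
  (forall s, x - t < s <= x -> is_derive g s (g1 s)) ->
  (forall s, x - t < s <= x -> is_derive g1 s (g2 s)) ->
  continuity_pt g (x - t) ->
  (forall s, x - t < s < x -> Rabs (g2 s) <= M) ->
  Rabs (g (x - t) - g x + t * g1 x) <= M * t ^ 2 / 2.
Proof.
  intros Ht Hd1 Hd2 Hc HM.
  pose proof (taylor_remainder2 (fun z => g (- z)) (fun z => - g1 (- z)) (fun z => g2 (- z)) (- x) t M Ht) as T.
  replace (- x + t) with (- (x - t)) in T by ring. rewrite !Ropp_involutive in T.
  replace (g (x - t) - g x + t * g1 x) with (g (x - t) - g x - t * - g1 x) by ring.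
  apply T.
  - intros s Hs. apply is_derive_reflect. apply Hd1; lra.
  - intros s Hs. replace (g2 (- s)) with (- - g2 (- s)) by ring.
    apply (is_derive_opp (fun z => g1 (- z))). apply is_derive_reflect. apply Hd2; lra.
  - apply continuity_pt_reflect. rewrite Ropp_involutive; exact Hc.
  - intros s Hs. apply HM; lra.
Qed.

Lemma taylor_remainder3_left (g g1 g2 g3 : R -> R) x t M : 0 < t ->
  (forall s, x - t < s <= x -> is_derive g s (g1 s)) ->
  (forall s, x - t < s <= x -> is_derive g1 s (g2 s)) ->
  (forall s, x - t < s <= x -> is_derive g2 s (g3 s)) ->
  continuity_pt g (x - t) ->
  (forall s, x - t < s < x -> Rabs (g3 s) <= M) ->
  Rabs (g (x - t) - g x + t * g1 x - t ^ 2 / 2 * g2 x) <= M * t ^ 3 / 6.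
Proof.
  intros Ht Hd1 Hd2 Hd3 Hc HM.
  pose proof (taylor_remainder3 (fun z => g (- z)) (fun z => - g1 (- z)) (fun z => g2 (- z)) (fun z => - g3 (- z)) (- x) t M Ht) as T.
  replace (- x + t) with (- (x - t)) in T by ring. rewrite !Ropp_involutive in T.
  replace (g (x - t) - g x + t * g1 x - t ^ 2 / 2 * g2 x) with (g (x - t) - g x - t * - g1 x - t ^ 2 / 2 * g2 x) by ring.
  apply T.
  - intros s Hs. apply is_derive_reflect. apply Hd1; lra.
  - intros s Hs. replace (g2 (- s)) with (- - g2 (- s)) by ring.
    apply (is_derive_opp (fun z => g1 (- z))). apply is_derive_reflect. apply Hd2; lra.
  - intros s Hs. apply is_derive_reflect. apply Hd3; lra.
  - apply continuity_pt_reflect. rewrite Ropp_involutive; exact Hc.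
  - intros s Hs. rewrite Rabs_Ropp. apply HM; lra.
Qed.

Lemma taylor_remainder4_left (g g1 g2 g3 g4 : R -> R) x t M : 0 < t ->
  (forall s, x - t < s <= x -> is_derive g s (g1 s)) ->
  (forall s, x - t < s <= x -> is_derive g1 s (g2 s)) ->
  (forall s, x - t < s <= x -> is_derive g2 s (g3 s)) ->
  (forall s, x - t < s <= x -> is_derive g3 s (g4 s)) ->
  continuity_pt g (x - t) ->
  (forall s, x - t < s < x -> Rabs (g4 s) <= M) ->
  Rabs (g (x - t) - g x + t * g1 x - t ^ 2 / 2 * g2 x + t ^ 3 / 6 * g3 x) <= M * t ^ 4 / 24.
Proof.
  intros Ht Hd1 Hd2 Hd3 Hd4 Hc HM.
  pose proof (taylor_remainder4 (fun z => g (- z)) (fun z => - g1 (- z)) (fun z => g2 (- z)) (fun z => - g3 (- z)) (fun z => g4 (- z)) (- x) t M Ht) as T.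
  replace (- x + t) with (- (x - t)) in T by ring. rewrite !Ropp_involutive in T.
  replace (g (x - t) - g x + t * g1 x - t ^ 2 / 2 * g2 x + t ^ 3 / 6 * g3 x) with (g (x - t) - g x - t * - g1 x - t ^ 2 / 2 * g2 x - t ^ 3 / 6 * - g3 x) by ring.
  apply T.
  - intros s Hs. apply is_derive_reflect. apply Hd1; lra.
  - intros s Hs. replace (g2 (- s)) with (- - g2 (- s)) by ring.
    apply (is_derive_opp (fun z => g1 (- z))). apply is_derive_reflect. apply Hd2; lra.
  - intros s Hs. apply is_derive_reflect. apply Hd3; lra.
  - intros s Hs. replace (g4 (- s)) with (- - g4 (- s)) by ring.
    apply (is_derive_opp (fun z => g3 (- z))). apply is_derive_reflect. apply Hd4; lra.
  - apply continuity_pt_reflect. rewrite Ropp_involutive; exact Hc.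
  - intros s Hs. apply HM; lra.
Qed.

Lemma Rabs_div_le a d K : 0 < d -> Rabs a <= K * d -> Rabs (a / d) <= K.
Proof.
  intros Hd H. unfold Rdiv. rewrite Rabs_mult, Rabs_inv, (Rabs_pos_eq d) by lra.
  apply (Rmult_le_reg_r d); [lra|]. rewrite Rmult_assoc, Rinv_l by lra. lra.
Qed.

Lemma Rabs_mult_le a b A B : Rabs a <= A -> Rabs b <= B -> Rabs (a * b) <= A * B.
Proof.
  intros H1 H2. rewrite Rabs_mult. apply Rmult_le_compat; auto; apply Rabs_pos.
Qed.

Lemma Rabs_triang3 a b c : Rabs (a + b + c) <= Rabs a + Rabs b + Rabs c.
Proof.
  eapply Rle_trans; [apply Rabs_triang|]. pose proof (Rabs_triang a b). lra.
Qed.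

Definition local_tau (eps s bi : R) (y y1 y2 : R -> R) (x hl hr : R) : R :=
  - eps * s * (((y (x + hr) - y x) / hr - (y x - y (x - hl)) / hl) / ((hl + hr) / 2))
  - bi * ((y (x + hr) - y x) / hr) + eps * y2 x + bi * y1 x.

Section LocalTruncationError.
Variables (eps s bi : R) (y y1 y2 y3 y4 : R -> R) (x hl hr : R).
Hypotheses (He : 0 < eps) (Hs : 0 <= s <= 1) (Hb : 0 <= bi) (Hl : 0 < hl) (Hr : 0 < hr).
Hypotheses (Dy1 : forall z, x - hl < z < x + hr -> is_derive y z (y1 z))
           (Dy2 : forall z, x - hl < z < x + hr -> is_derive y1 z (y2 z))
           (Cl : continuity_pt y (x - hl)) (Cr : continuity_pt y (x + hr)).

Lemma local_tau_crude M2 : (forall z, x - hl < z < x + hr -> Rabs (y2 z) <= M2) ->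
  Rabs (local_tau eps s bi y y1 y2 x hl hr) <= 2 * eps * M2 + bi * hr * M2 / 2.
Proof.
  intros HM.
  assert (A := taylor_remainder2 y y1 y2 x hr M2 Hr ltac:(intros; apply Dy1; lra) ltac:(intros; apply Dy2; lra) Cr ltac:(intros; apply HM; lra)).
  assert (B := taylor_remainder2_left y y1 y2 x hl M2 Hl ltac:(intros; apply Dy1; lra) ltac:(intros; apply Dy2; lra) Cl ltac:(intros; apply HM; lra)).
  assert (M0 : Rabs (y2 x) <= M2) by (apply HM; lra).
  set (ep := y (x + hr) - y x - hr * y1 x) in A.
  set (em := y (x - hl) - y x + hl * y1 x) in B.
  assert (BP : Rabs (ep / hr) <= M2 * hr / 2) by (apply Rabs_div_le; [lra| nra]).
  assert (BM : Rabs (em / hl) <= M2 * hl / 2) by (apply Rabs_div_le; [lra| nra]).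
  assert (BD : Rabs ((ep / hr + em / hl) / ((hl + hr) / 2)) <= M2).
  { apply Rabs_div_le; [lra|]. eapply Rle_trans; [apply Rabs_triang|]. lra. }
  assert (E : local_tau eps s bi y y1 y2 x hl hr = - (eps * s) * ((ep / hr + em / hl) / ((hl + hr) / 2)) + (- bi) * (ep / hr) + eps * y2 x).
  { unfold local_tau, ep, em. field. lra. }
  rewrite E. eapply Rle_trans; [apply Rabs_triang3|].
  assert (Rabs (- (eps * s) * ((ep / hr + em / hl) / ((hl + hr) / 2))) <= eps * M2).
  { replace (eps * M2) with (eps * 1 * M2) by ring. apply Rabs_mult_le; auto.
    rewrite Rabs_Ropp, Rabs_mult, !Rabs_pos_eq by lra. nra. }
  assert (Rabs (- bi * (ep / hr)) <= bi * (M2 * hr / 2)).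
  { apply Rabs_mult_le; auto. rewrite Rabs_Ropp, Rabs_pos_eq; lra. }
  assert (Rabs (eps * y2 x) <= eps * M2) by (apply Rabs_mult_le; auto; rewrite Rabs_pos_eq; lra).
  lra.
Qed.

Lemma local_tau_nonuniform M3 rho : (forall z, x - hl < z < x + hr -> is_derive y2 z (y3 z)) ->
  (forall z, x - hl < z < x + hr -> Rabs (y3 z) <= M3) ->
  eps * rho = bi * hr / 2 -> Rabs (1 - s - rho) <= 4 * rho ^ 2 ->
  Rabs (local_tau eps s bi y y1 y2 x hl hr) <=
    eps * (4 * rho ^ 2) * Rabs (y2 x) + eps * s * (M3 / 3 * (hl + hr)) + bi * (M3 * hr ^ 2 / 6).
Proof.
  intros Dy3 HM Hrho Hsig.
  assert (A := taylor_remainder3 y y1 y2 y3 x hr M3 Hr ltac:(intros; apply Dy1; lra) ltac:(intros; apply Dy2; lra) ltac:(intros; apply Dy3; lra) Cr ltac:(intros; apply HM; lra)).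
  assert (B := taylor_remainder3_left y y1 y2 y3 x hl M3 Hl ltac:(intros; apply Dy1; lra) ltac:(intros; apply Dy2; lra) ltac:(intros; apply Dy3; lra) Cl ltac:(intros; apply HM; lra)).
  set (ep := y (x + hr) - y x - hr * y1 x - hr ^ 2 / 2 * y2 x) in A.
  set (em := y (x - hl) - y x + hl * y1 x - hl ^ 2 / 2 * y2 x) in B.
  assert (BP : Rabs (ep / hr) <= M3 * hr ^ 2 / 6) by (apply Rabs_div_le; [lra| nra]).
  assert (BM : Rabs (em / hl) <= M3 * hl ^ 2 / 6) by (apply Rabs_div_le; [lra| nra]).
  assert (M3p : 0 <= M3) by (specialize (HM x ltac:(lra)); pose proof (Rabs_pos (y3 x)); lra).
  assert (BD : Rabs ((ep / hr + em / hl) / ((hl + hr) / 2)) <= M3 / 3 * (hl + hr)).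
  { apply Rabs_div_le; [lra|]. eapply Rle_trans; [apply Rabs_triang|].
    assert (M3 * (hr^2 + hl^2) <= M3 * (hl+hr)^2) by (apply Rmult_le_compat_l; nra). lra. }
  assert (E : local_tau eps s bi y y1 y2 x hl hr = (eps * (1 - s - rho)) * y2 x + (- (eps * s)) * ((ep / hr + em / hl) / ((hl + hr) / 2)) + (- bi) * (ep / hr)).
  { unfold local_tau, ep, em. apply (Rmult_eq_reg_l 2); [|lra].
    replace (2 * ((eps * (1 - s - rho)) * y2 x + (- (eps * s)) * ((((y (x + hr) - y x - hr * y1 x - hr ^ 2 / 2 * y2 x) / hr + (y (x - hl) - y x + hl * y1 x - hl ^ 2 / 2 * y2 x) / hl) / ((hl + hr) / 2))) + (- bi) * ((y (x + hr) - y x - hr * y1 x - hr ^ 2 / 2 * y2 x) / hr)))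
      with (2 * eps * (1 - s) * y2 x - 2 * (eps * rho) * y2 x + (- (eps * s)) * 2 * ((((y (x + hr) - y x - hr * y1 x - hr ^ 2 / 2 * y2 x) / hr + (y (x - hl) - y x + hl * y1 x - hl ^ 2 / 2 * y2 x) / hl) / ((hl + hr) / 2))) + 2 * (- bi) * ((y (x + hr) - y x - hr * y1 x - hr ^ 2 / 2 * y2 x) / hr)) by ring.
    rewrite Hrho. field. lra. }
  rewrite E. eapply Rle_trans; [apply Rabs_triang3|].
  assert (Rabs (eps * (1 - s - rho) * y2 x) <= eps * (4 * rho ^ 2) * Rabs (y2 x)).
  { rewrite !Rabs_mult, (Rabs_pos_eq eps) by lra. apply Rmult_le_compat_r; [apply Rabs_pos|].
    apply Rmult_le_compat_l; lra. }
  assert (Rabs (- (eps * s) * ((ep / hr + em / hl) / ((hl + hr) / 2))) <= eps * s * (M3 / 3 * (hl + hr))).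
  { apply Rabs_mult_le; auto. rewrite Rabs_Ropp, Rabs_mult, !Rabs_pos_eq by lra. lra. }
  assert (Rabs (- bi * (ep / hr)) <= bi * (M3 * hr ^ 2 / 6)).
  { apply Rabs_mult_le; auto. rewrite Rabs_Ropp, Rabs_pos_eq; lra. }
  lra.
Qed.

Lemma local_tau_uniform M3 M4 rho : hl = hr ->
  (forall z, x - hl < z < x + hr -> is_derive y2 z (y3 z)) ->
  (forall z, x - hl < z < x + hr -> is_derive y3 z (y4 z)) ->
  (forall z, x - hl < z < x + hr -> Rabs (y3 z) <= M3) ->
  (forall z, x - hl < z < x + hr -> Rabs (y4 z) <= M4) ->
  eps * rho = bi * hr / 2 -> Rabs (1 - s - rho) <= 4 * rho ^ 2 ->
  Rabs (local_tau eps s bi y y1 y2 x hl hr) <=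
    eps * (4 * rho ^ 2) * Rabs (y2 x) + eps * s * (M4 * hr ^ 2 / 12) + bi * (M3 * hr ^ 2 / 6).
Proof.
  intros Eh Dy3 Dy4 HM3 HM4 Hrho Hsig.
  assert (A := taylor_remainder3 y y1 y2 y3 x hr M3 Hr ltac:(intros; apply Dy1; lra) ltac:(intros; apply Dy2; lra) ltac:(intros; apply Dy3; lra) Cr ltac:(intros; apply HM3; lra)).
  assert (A4 := taylor_remainder4 y y1 y2 y3 y4 x hr M4 Hr ltac:(intros; apply Dy1; lra) ltac:(intros; apply Dy2; lra) ltac:(intros; apply Dy3; lra) ltac:(intros; apply Dy4; lra) Cr ltac:(intros; apply HM4; lra)).
  assert (B4 := taylor_remainder4_left y y1 y2 y3 y4 x hl M4 Hl ltac:(intros; apply Dy1; lra) ltac:(intros; apply Dy2; lra) ltac:(intros; apply Dy3; lra) ltac:(intros; apply Dy4; lra) Cl ltac:(intros; apply HM4; lra)).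
  subst hl.
  set (ep := y (x + hr) - y x - hr * y1 x - hr ^ 2 / 2 * y2 x) in A.
  set (e4 := y (x + hr) - y x - hr * y1 x - hr ^ 2 / 2 * y2 x - hr ^ 3 / 6 * y3 x) in A4.
  set (f4 := y (x - hr) - y x + hr * y1 x - hr ^ 2 / 2 * y2 x + hr ^ 3 / 6 * y3 x) in B4.
  assert (BP : Rabs (ep / hr) <= M3 * hr ^ 2 / 6) by (apply Rabs_div_le; [lra| nra]).
  assert (BD : Rabs ((e4 + f4) / hr ^ 2) <= M4 * hr ^ 2 / 12).
  { apply Rabs_div_le; [nra|]. eapply Rle_trans; [apply Rabs_triang|]. lra. }
  assert (E : local_tau eps s bi y y1 y2 x hr hr = (eps * (1 - s - rho)) * y2 x + (- (eps * s)) * ((e4 + f4) / hr ^ 2) + (- bi) * (ep / hr)).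
  { unfold local_tau, ep, e4, f4. apply (Rmult_eq_reg_l 2); [|lra].
    replace (2 * ((eps * (1 - s - rho)) * y2 x + (- (eps * s)) * (((y (x + hr) - y x - hr * y1 x - hr ^ 2 / 2 * y2 x - hr ^ 3 / 6 * y3 x) + (y (x - hr) - y x + hr * y1 x - hr ^ 2 / 2 * y2 x + hr ^ 3 / 6 * y3 x)) / hr ^ 2) + (- bi) * ((y (x + hr) - y x - hr * y1 x - hr ^ 2 / 2 * y2 x) / hr)))
      with (2 * eps * (1 - s) * y2 x - 2 * (eps * rho) * y2 x + 2 * (- (eps * s)) * (((y (x + hr) - y x - hr * y1 x - hr ^ 2 / 2 * y2 x - hr ^ 3 / 6 * y3 x) + (y (x - hr) - y x + hr * y1 x - hr ^ 2 / 2 * y2 x + hr ^ 3 / 6 * y3 x)) / hr ^ 2) + 2 * (- bi) * ((y (x + hr) - y x - hr * y1 x - hr ^ 2 / 2 * y2 x) / hr)) by ring.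
    rewrite Hrho. field. lra. }
  rewrite E. eapply Rle_trans; [apply Rabs_triang3|].
  assert (Rabs (eps * (1 - s - rho) * y2 x) <= eps * (4 * rho ^ 2) * Rabs (y2 x)).
  { rewrite !Rabs_mult, (Rabs_pos_eq eps) by lra. apply Rmult_le_compat_r; [apply Rabs_pos|].
    apply Rmult_le_compat_l; lra. }
  assert (Rabs (- (eps * s) * ((e4 + f4) / hr ^ 2)) <= eps * s * (M4 * hr ^ 2 / 12)).
  { apply Rabs_mult_le; auto. rewrite Rabs_Ropp, Rabs_mult, !Rabs_pos_eq by lra. lra. }
  assert (Rabs (- bi * (ep / hr)) <= bi * (M3 * hr ^ 2 / 6)).
  { apply Rabs_mult_le; auto. rewrite Rabs_Ropp, Rabs_pos_eq; lra. }
  lra.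
Qed.

End LocalTruncationError.

Lemma tau_local_tau eps (b : R -> R) (xm : nat -> R) (g g1 g2 : R -> R) i : (1 <= i)%nat ->
  (forall t, Derive g t = g1 t) -> (forall t, Derive g1 t = g2 t) ->
  tau eps b xm g i = local_tau eps (Defs.sigma (b (xm i) * hs xm (S i) / (2 * eps))) (b (xm i)) g g1 g2
     (xm i) (hs xm i) (hs xm (S i)).
Proof.
  intros Hi E1 E2.
  assert (E3 : Derive_n g 2 (xm i) = g2 (xm i)).
  { simpl. rewrite <- E2. apply Derive_ext. intros t. apply E1. }
  unfold tau, local_tau, D2, Dp, Dm, hbar. rewrite E3, E1.
  replace (xm i + hs xm (S i)) with (xm (S i)) by (unfold hs; simpl; rewrite Nat.sub_0_r; ring).
  replace (xm i - hs xm i) with (xm (i - 1)%nat) by (unfold hs; ring).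
  reflexivity.
Qed.

Lemma le_of_derive_nonneg (f df : R -> R) t : 0 <= t ->
  (forall x, is_derive f x (df x)) -> (forall x, 0 < x < t -> 0 <= df x) -> f 0 <= f t.
Proof.
  intros Ht Hd Hp. destruct (Req_dec t 0) as [E|E]; [subst; lra|].
  destruct (MVT_is_derive f df 0 t ltac:(lra)) as [c [Pc Ec]].
  { intros; apply Hd. } { intros; apply (is_derive_continuity_pt _ _ (df x)); apply Hd. }
  specialize (Hp c Pc). nra.
Qed.

Lemma exp_ge_taylor1 t : 0 <= t -> 1 + t <= exp t.
Proof. intros. destruct (Req_dec t 0); [subst; rewrite exp_0; lra|]. left; apply exp_ineq1; auto. Qed.

Lemma exp_ge_taylor2 t : 0 <= t -> 1 + t + t ^ 2 / 2 <= exp t.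
Proof.
  intros Ht. pose proof (le_of_derive_nonneg (fun x => exp x - (1 + x + x ^ 2 / 2)) (fun x => exp x - (1 + x)) t Ht) as H.
  simpl in H. rewrite exp_0 in H. assert (H' : 0 <= exp t - (1 + t + t * (t * 1) / 2)); [|lra].
  replace 0 with (1 - (1 + 0 + 0 * (0 * 1) / 2)) by field. apply H.
  - intros x. auto_derive; auto. field.
  - intros x Hx. pose proof (exp_ge_taylor1 x). lra.
Qed.

Lemma exp_ge_taylor3 t : 0 <= t -> 1 + t + t ^ 2 / 2 + t ^ 3 / 6 <= exp t.
Proof.
  intros Ht. pose proof (le_of_derive_nonneg (fun x => exp x - (1 + x + x ^ 2 / 2 + x ^ 3 / 6)) (fun x => exp x - (1 + x + x ^ 2 / 2)) t Ht) as H.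
  simpl in H. rewrite exp_0 in H. simpl. enough (0 <= exp t - (1 + t + t * (t * 1) / 2 + t * (t * (t * 1)) / 6)) by lra.
  replace 0 with (1 - (1 + 0 + 0 * (0 * 1) / 2 + 0 * (0 * (0 * 1)) / 6)) by field. apply H.
  - intros x. auto_derive; auto. field.
  - intros x Hx. pose proof (exp_ge_taylor2 x). simpl in H0. lra.
Qed.

Lemma exp_le_cubic t : 0 <= t <= 1 -> exp t <= 1 + t + t ^ 2 / 2 + t ^ 3.
Proof.
  intros Ht.
  assert (E1 : forall x, 0 <= x <= 1 -> exp x <= 1 + 6 * x).
  { intros x Hx. pose proof (le_of_derive_nonneg (fun z => 1 + 6 * z - exp z) (fun z => 6 - exp z) x ltac:(lra)) as H.
    simpl in H. rewrite exp_0 in H. enough (0 <= 1 + 6 * x - exp x) by lra.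
    replace 0 with (1 + 6 * 0 - 1) by ring. apply H.
    - intros z. auto_derive; auto. ring.
    - intros z Hz. pose proof exp_le_3. assert (exp z <= exp 1) by (destruct (Req_dec z 1); [subst; lra| left; apply exp_increasing; lra]). lra. }
  assert (E2 : forall x, 0 <= x <= 1 -> exp x <= 1 + x + 3 * x ^ 2).
  { intros x Hx. pose proof (le_of_derive_nonneg (fun z => 1 + z + 3 * z ^ 2 - exp z) (fun z => 1 + 6 * z - exp z) x ltac:(lra)) as H.
    simpl in H. rewrite exp_0 in H. simpl. enough (0 <= 1 + x + 3 * (x * (x * 1)) - exp x) by lra.
    replace 0 with (1 + 0 + 3 * (0 * (0 * 1)) - 1) by ring. apply H.
    - intros z. auto_derive; auto. ring.
    - intros z Hz. pose proof (E1 z ltac:(lra)). lra. }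
  pose proof (le_of_derive_nonneg (fun z => 1 + z + z ^ 2 / 2 + z ^ 3 - exp z) (fun z => 1 + z + 3 * z ^ 2 - exp z) t ltac:(lra)) as H.
  simpl in H. rewrite exp_0 in H. simpl. enough (0 <= 1 + t + t * (t * 1) / 2 + t * (t * (t * 1)) - exp t) by lra.
  replace 0 with (1 + 0 + 0 * (0 * 1) / 2 + 0 * (0 * (0 * 1)) - 1) by field. apply H.
  - intros z. auto_derive; auto. field.
  - intros z Hz. pose proof (E2 z ltac:(lra)). simpl in H0. lra.
Qed.

Lemma exp_le_compat p q : p <= q -> exp p <= exp q.
Proof. intros. destruct (Req_dec p q) as [E|E]; [subst; lra|left; apply exp_increasing; lra]. Qed.

Lemma sigma_bounds rho : 0 < rho -> 0 < Defs.sigma rho <= 1.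
Proof.
  intros Hr. unfold Defs.sigma. destruct (Rlt_dec 0 rho) as [_|]; [|lra].
  pose proof (exp_ge_taylor1 (2 * rho) ltac:(lra)).
  assert (0 < exp (2 * rho) - 1) by lra.
  split. apply Rdiv_lt_0_compat; lra.
  apply (Rmult_le_reg_r (exp (2 * rho) - 1)); auto.
  unfold Rdiv; rewrite Rmult_assoc, Rinv_l by lra. lra.
Qed.

Lemma sigma_expansion rho : 0 < rho -> Rabs (1 - Defs.sigma rho - rho) <= 4 * rho ^ 2.
Proof.
  intros Hr. unfold Defs.sigma. destruct (Rlt_dec 0 rho) as [_|]; [|lra].
  set (t := 2 * rho). assert (Ht : 0 < t) by (unfold t; lra).
  set (E := exp t - 1).
  pose proof (exp_ge_taylor3 t ltac:(lra)) as L3. fold E in L3.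
  assert (EP : 0 < E) by (unfold E in *; assert (0 < t ^ 2 / 2 + t ^ 3 / 6) by (apply Rplus_lt_0_compat; apply Rdiv_lt_0_compat; try apply pow_lt; lra); lra).
  replace rho with (t / 2) by (unfold t; field).
  replace (4 * (t / 2) ^ 2) with (t ^ 2) by field.
  apply Rabs_le. split.
  - assert (t / E <= 1 - t / 2 + t ^ 2 / 4).
    { apply (Rmult_le_reg_r E); auto. replace (t / E * E) with t by (field; lra).
      assert (0 < 1 - t/2 + t^2/4) by (pose proof (pow2_ge_0 (t-1)); nra).
      apply Rle_trans with ((1 - t/2 + t^2/4) * (t + t^2/2 + t^3/6)).
      + assert (0 <= t^3/6 + t^4/24 + t^5/24) by (pose proof (pow_le t 3); pose proof (pow_le t 4); pose proof (pow_le t 5); lra).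
        replace ((1 - t/2 + t^2/4) * (t + t^2/2 + t^3/6)) with (t + (t^3/6 + t^4/24 + t^5/24)) by field. lra.
      + apply Rmult_le_compat_l; unfold E; lra. }
    pose proof (pow2_ge_0 t). lra.
  - assert (1 - t / 2 - t ^ 2 <= t / E).
    { apply (Rmult_le_reg_r E); auto. replace (t / E * E) with t by (field; lra).
      destruct (Rle_dec (1 - t / 2 - t ^ 2) 0) as [Hn|Hp].
      - nra.
      - assert (t <= 1) by nra.
        pose proof (exp_le_cubic t ltac:(lra)) as U. fold E in U.
        assert (E <= t + t ^ 2 / 2 + t ^ 3) by (unfold E in *; lra).
        apply Rle_trans with ((1 - t / 2 - t ^ 2) * (t + t ^ 2 / 2 + t ^ 3)).
        + apply Rmult_le_compat_l; lra.
        + assert (0 <= t^3/4 + t^4 + t^5) by (pose proof (pow_le t 3); pose proof (pow_le t 4); pose proof (pow_le t 5); lra).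
          replace ((1 - t / 2 - t ^ 2) * (t + t ^ 2 / 2 + t ^ 3)) with (t - (t^3/4 + t^4 + t^5)) by field. lra. }
    lra.
Qed.

Lemma CkR4_is_derive g j x : CkR 4 g -> (j <= 3)%nat -> is_derive (Derive_n g j) x (Derive_n g (S j) x).
Proof.
  intros [H _] Hj. specialize (H (S j) x ltac:(lia)). simpl in H.
  apply Derive_correct in H. exact H.
Qed.

Definition derivatives_bounded_by (M : R) (g : R -> R) : Prop :=
  forall j x, (j <= 3)%nat -> 0 <= x <= 1 -> Rabs (Derive_n g j x) <= M.

Lemma continuity_bounded_01 (g : R -> R) : (forall x, 0 <= x <= 1 -> continuity_pt g x) ->
  exists M, 0 < M /\ forall x, 0 <= x <= 1 -> Rabs (g x) <= M.
Proof.
  intros Hc.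
  destruct (continuity_ab_maj (fun x => Rabs (g x)) 0 1 ltac:(lra)) as [m [Hm Pm]].
  { intros x Hx. apply (continuity_pt_comp g Rabs); [apply Hc; auto|apply Rcontinuity_abs]. }
  exists (Rabs (g m) + 1). split. pose proof (Rabs_pos (g m)); lra.
  intros x Hx. specialize (Hm x Hx). simpl in Hm. lra.
Qed.

Lemma CkR4_derivatives_bounded g : CkR 4 g -> exists M, derivatives_bounded_by M g.
Proof.
  intros H.
  assert (C : forall j, (j <= 3)%nat -> exists M, forall x, 0 <= x <= 1 -> Rabs (Derive_n g j x) <= M).
  { intros j Hj. destruct (continuity_bounded_01 (Derive_n g j)) as [M [_ HM]]; [|now exists M].
    intros x _. apply (is_derive_continuity_pt _ _ (Derive_n g (S j) x)). apply CkR4_is_derive; auto. }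
  destruct (C 0%nat ltac:(lia)) as [M0 H0], (C 1%nat ltac:(lia)) as [M1 H1],
    (C 2%nat ltac:(lia)) as [M2 H2], (C 3%nat ltac:(lia)) as [M3 H3].
  exists (Rmax (Rmax M0 M1) (Rmax M2 M3)).
  intros j x Hj Hx. pose proof (Rmax_l M0 M1). pose proof (Rmax_r M0 M1).
  pose proof (Rmax_l M2 M3). pose proof (Rmax_r M2 M3).
  pose proof (Rmax_l (Rmax M0 M1) (Rmax M2 M3)). pose proof (Rmax_r (Rmax M0 M1) (Rmax M2 M3)).
  destruct j as [|[|[|[|j]]]]; try lia.
  - specialize (H0 x Hx); lra.
  - specialize (H1 x Hx); lra.
  - specialize (H2 x Hx); lra.
  - specialize (H3 x Hx); lra.
Qed.

Lemma CkR4_common_bound b c f K : CkR 4 b -> CkR 4 c -> CkR 4 f ->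
  exists M, K <= M /\ 1 <= M /\ derivatives_bounded_by M b /\
    derivatives_bounded_by M c /\ derivatives_bounded_by M f.
Proof.
  intros Hb Hc Hf.
  destruct (CkR4_derivatives_bounded b Hb) as [Mb HMb], (CkR4_derivatives_bounded c Hc) as [Mc HMc],
    (CkR4_derivatives_bounded f Hf) as [Mf HMf].
  set (M := Rmax (Rmax K 1) (Rmax Mb (Rmax Mc Mf))).
  assert (LK : Rmax K 1 <= M) by apply Rmax_l.
  assert (L : Rmax Mb (Rmax Mc Mf) <= M) by apply Rmax_r.
  pose proof (Rmax_l K 1). pose proof (Rmax_r K 1). pose proof (Rmax_l Mb (Rmax Mc Mf)).
  pose proof (Rmax_r Mb (Rmax Mc Mf)). pose proof (Rmax_l Mc Mf). pose proof (Rmax_r Mc Mf).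
  exists M. repeat split; try lra; intros j x Hj Hx.
  - specialize (HMb j x Hj Hx); lra.
  - specialize (HMc j x Hj Hx); lra.
  - specialize (HMf j x Hj Hx); lra.
Qed.

Lemma lower_bound_margin (b : R -> R) beta : (forall x, 0 <= x <= 1 -> continuity_pt b x) ->
  (forall x, 0 <= x <= 1 -> b x > beta) ->
  exists d, 0 < d /\ forall x, 0 <= x <= 1 -> beta + d <= b x.
Proof.
  intros Hc Hb.
  destruct (continuity_ab_min b 0 1 ltac:(lra) Hc) as [m [Hm Pm]].
  exists (b m - beta). split. specialize (Hb m Pm). lra.
  intros x Hx. specialize (Hm x Hx). lra.
Qed.

Lemma mesh_fine xi N J i : (i <= J)%nat -> mesh xi N J i = INR i * (xi / INR J).
Proof. intros Hi. unfold mesh. destruct (Nat.leb_spec i J); [auto|lia]. Qed.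

Lemma mesh_coarse xi N J i : (1 <= J)%nat -> (J <= i)%nat ->
  mesh xi N J i = xi + INR (i - J) * ((1 - xi) / INR (N - J)).
Proof.
  intros HJ Hi. unfold mesh. destruct (Nat.leb_spec i J); [|auto].
  assert (i = J) by lia. subst i. rewrite Nat.sub_diag, Rmult_0_l, Rplus_0_r.
  assert (0 < INR J) by (apply lt_0_INR; lia). field. lra.
Qed.

Lemma hs_fine xi N J i : (1 <= i <= J)%nat -> hs (mesh xi N J) i = xi / INR J.
Proof.
  intros Hi. unfold hs. rewrite !mesh_fine by lia.
  replace (INR i) with (INR (i - 1) + 1). ring.
  replace i with (S (i - 1)) at 2 by lia. rewrite S_INR. ring.
Qed.

Lemma hs_coarse xi N J i : (1 <= J)%nat -> (J + 1 <= i)%nat ->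
  hs (mesh xi N J) i = (1 - xi) / INR (N - J).
Proof.
  intros HJ Hi. unfold hs. rewrite !mesh_coarse by lia.
  replace (i - J)%nat with (S (i - 1 - J)) by lia. rewrite S_INR. ring.
Qed.

Lemma Rabs_plus_le a b A B : Rabs a <= A -> Rabs b <= B -> Rabs (a + b) <= A + B.
Proof. intros. eapply Rle_trans; [apply Rabs_triang|]. lra. Qed.
Lemma Rabs_minus_le a b A B : Rabs a <= A -> Rabs b <= B -> Rabs (a - b) <= A + B.
Proof. intros. unfold Rminus. eapply Rle_trans; [apply Rabs_triang|]. rewrite Rabs_Ropp. lra. Qed.
Lemma Rabs_opp_le a A : Rabs a <= A -> Rabs (- a) <= A.
Proof. intros. rewrite Rabs_Ropp. auto. Qed.
Lemma Rabs_nonneg_le k : 0 <= k -> Rabs k <= k.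
Proof. intros. rewrite Rabs_pos_eq; lra. Qed.

Lemma Rabs_mult_div_plus_le p q r M eps : 0 < eps <= 1 -> 0 <= M ->
  Rabs p <= M -> Rabs q <= M -> Rabs r <= M -> Rabs (p * q / eps + r) <= (M * M + M) / eps.
Proof.
  intros He HM Hp Hq Hr. eapply Rle_trans; [apply Rabs_triang|].
  assert (Rabs (p * q / eps) <= M * M / eps).
  { unfold Rdiv. rewrite Rabs_mult, Rabs_inv, (Rabs_pos_eq eps) by lra.
    apply Rmult_le_compat_r; [left; apply Rinv_0_lt_compat; lra|]. apply Rabs_mult_le; auto. }
  assert (M <= M / eps).
  { assert (1 <= / eps) by (rewrite <- Rinv_1; apply Rinv_le_contravar; lra). unfold Rdiv; nra. }
  unfold Rdiv in *. lra.
Qed.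

Lemma dominating_sum_bounds Z X Y k k' : 0 < k -> 0 < k' -> 0 <= Z -> 0 <= X -> 0 <= Y ->
  X <= (Z + X / k + Y / k' + 1) * k /\ Y <= (Z + X / k + Y / k' + 1) * k' /\
  Z <= Z + X / k + Y / k' + 1.
Proof.
  intros Hk Hk' HZ HX HY.
  assert (0 <= X / k) by (apply Rdiv_le_0_compat; lra).
  assert (0 <= Y / k') by (apply Rdiv_le_0_compat; lra).
  replace ((Z + X / k + Y / k' + 1) * k) with (X + (Z + Y / k' + 1) * k) by (field; lra).
  replace ((Z + X / k + Y / k' + 1) * k') with (Y + (Z + X / k + 1) * k') by (field; lra).
  assert (0 <= (Z + Y / k' + 1) * k) by (apply Rmult_le_pos; lra).
  assert (0 <= (Z + X / k + 1) * k') by (apply Rmult_le_pos; lra).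
  lra.
Qed.

Ltac bound_terms := first
 [ eapply Rabs_plus_le; [bound_terms|bound_terms]
 | eapply Rabs_minus_le; [bound_terms|bound_terms]
 | eapply Rabs_mult_le; [bound_terms|bound_terms]
 | eapply Rabs_opp_le; bound_terms
 | apply Rabs_nonneg_le; lra
 | eassumption ].

Lemma Rabs_div_lower_le a d S beta : 0 < beta -> beta <= d -> Rabs a <= S -> Rabs (a / d) <= S / beta.
Proof.
  intros Hb Hd Ha. apply Rabs_div_le; [lra|].
  assert (0 <= S) by (pose proof (Rabs_pos a); lra).
  apply Rle_trans with S; auto.
  replace S with (S / beta * beta) at 1 by (field; lra).
  apply Rmult_le_compat_l; auto. apply Rdiv_le_0_compat; lra.
Qed.

Section TruncationError.
Variables (b c f : R -> R) (beta d M : R).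
Hypotheses (Hb4 : CkR 4 b) (Hc4 : CkR 4 c) (Hf4 : CkR 4 f).
Hypotheses (Hbeta : 0 < beta) (Hd : 0 < d) (HM : beta <= M) (HM1 : 1 <= M)
  (Hbmin : forall x, 0 <= x <= 1 -> beta + d <= b x)
  (Hcpos : forall x, 0 <= x <= 1 -> 0 <= c x)
  (HbM : derivatives_bounded_by M b) (HcM : derivatives_bounded_by M c)
  (HfM : derivatives_bounded_by M f).

Local Notation b1 := (Derive_n b 1).
Local Notation b2 := (Derive_n b 2).
Local Notation b3 := (Derive_n b 3).
Local Notation c1 := (Derive_n c 1).
Local Notation c2 := (Derive_n c 2).
Local Notation c3 := (Derive_n c 3).
Local Notation f1 := (Derive_n f 1).
Local Notation f2 := (Derive_n f 2).
Local Notation f3 := (Derive_n f 3).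

Let Db1 (x : R) : is_derive b x (b1 x).
Proof. exact (CkR4_is_derive b 0 x Hb4 ltac:(lia)). Qed.
Let Db2 (x : R) : is_derive b1 x (b2 x).
Proof. exact (CkR4_is_derive b 1 x Hb4 ltac:(lia)). Qed.
Let Db3 (x : R) : is_derive b2 x (b3 x).
Proof. exact (CkR4_is_derive b 2 x Hb4 ltac:(lia)). Qed.
Let Dc1 (x : R) : is_derive c x (c1 x).
Proof. exact (CkR4_is_derive c 0 x Hc4 ltac:(lia)). Qed.
Let Dc2 (x : R) : is_derive c1 x (c2 x).
Proof. exact (CkR4_is_derive c 1 x Hc4 ltac:(lia)). Qed.
Let Dc3 (x : R) : is_derive c2 x (c3 x).
Proof. exact (CkR4_is_derive c 2 x Hc4 ltac:(lia)). Qed.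
Let Df1 (x : R) : is_derive f x (f1 x).
Proof. exact (CkR4_is_derive f 0 x Hf4 ltac:(lia)). Qed.
Let Df2 (x : R) : is_derive f1 x (f2 x).
Proof. exact (CkR4_is_derive f 1 x Hf4 ltac:(lia)). Qed.
Let Df3 (x : R) : is_derive f2 x (f3 x).
Proof. exact (CkR4_is_derive f 2 x Hf4 ltac:(lia)). Qed.

Let Bb (x : R) (Hx : 0 <= x <= 1) : Rabs (b x) <= M.
Proof. exact (HbM 0%nat x ltac:(lia) Hx). Qed.
Let Bb1 (x : R) (Hx : 0 <= x <= 1) : Rabs (b1 x) <= M.
Proof. exact (HbM 1%nat x ltac:(lia) Hx). Qed.
Let Bb2 (x : R) (Hx : 0 <= x <= 1) : Rabs (b2 x) <= M.
Proof. exact (HbM 2%nat x ltac:(lia) Hx). Qed.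
Let Bb3 (x : R) (Hx : 0 <= x <= 1) : Rabs (b3 x) <= M.
Proof. exact (HbM 3%nat x ltac:(lia) Hx). Qed.
Let Bc (x : R) (Hx : 0 <= x <= 1) : Rabs (c x) <= M.
Proof. exact (HcM 0%nat x ltac:(lia) Hx). Qed.
Let Bc1 (x : R) (Hx : 0 <= x <= 1) : Rabs (c1 x) <= M.
Proof. exact (HcM 1%nat x ltac:(lia) Hx). Qed.
Let Bc2 (x : R) (Hx : 0 <= x <= 1) : Rabs (c2 x) <= M.
Proof. exact (HcM 2%nat x ltac:(lia) Hx). Qed.
Let Bc3 (x : R) (Hx : 0 <= x <= 1) : Rabs (c3 x) <= M.
Proof. exact (HcM 3%nat x ltac:(lia) Hx). Qed.
Let Bf (x : R) (Hx : 0 <= x <= 1) : Rabs (f x) <= M.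
Proof. exact (HfM 0%nat x ltac:(lia) Hx). Qed.
Let Bf1 (x : R) (Hx : 0 <= x <= 1) : Rabs (f1 x) <= M.
Proof. exact (HfM 1%nat x ltac:(lia) Hx). Qed.
Let Bf2 (x : R) (Hx : 0 <= x <= 1) : Rabs (f2 x) <= M.
Proof. exact (HfM 2%nat x ltac:(lia) Hx). Qed.
Let Bf3 (x : R) (Hx : 0 <= x <= 1) : Rabs (f3 x) <= M.
Proof. exact (HfM 3%nat x ltac:(lia) Hx). Qed.

Variable u0 : R -> R.
Hypotheses (Hu0d : forall x, ex_derive u0 x)
  (Hode0 : forall x, 0 < x < 1 -> - b x * Derive u0 x + c x * u0 x = f x) (Hu01 : u0 1 = 0).

Definition u0_1 x := (c x * u0 x - f x) / b x.
Definition u0_2 x := (c1 x * u0 x + c x * u0_1 x - f1 x - b1 x * u0_1 x) / b x.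
Definition u0_3 x := (c2 x * u0 x + 2 * c1 x * u0_1 x + c x * u0_2 x - f2 x - b2 x * u0_1 x - 2 * b1 x * u0_2 x) / b x.
Definition u0_4 x := (c3 x * u0 x + 3 * c2 x * u0_1 x + 3 * c1 x * u0_2 x + c x * u0_3 x - f3 x
   - b3 x * u0_1 x - 3 * b2 x * u0_2 x - 3 * b1 x * u0_3 x) / b x.

Lemma b_pos x : 0 <= x <= 1 -> 0 < b x.
Proof. intros; specialize (Hbmin x H); lra. Qed.

Lemma is_derive_u0 x : 0 < x < 1 -> is_derive u0 x (u0_1 x).
Proof.
  intros Hx. pose proof (Derive_correct _ _ (Hu0d x)) as H.
  replace (u0_1 x) with (Derive u0 x); auto.
  unfold u0_1. specialize (Hode0 x Hx). pose proof (b_pos x ltac:(lra)).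
  apply (Rmult_eq_reg_l (b x)); [|lra].
  replace (b x * ((c x * u0 x - f x) / b x)) with (c x * u0 x - f x) by (field; lra). lra.
Qed.

Lemma is_derive_u0_1 x : 0 < x < 1 -> is_derive u0_1 x (u0_2 x).
Proof.
  intros Hx. pose proof (is_derive_u0 x Hx). pose proof (b_pos x ltac:(lra)).
  pose proof (Db1 x). pose proof (Dc1 x). pose proof (Df1 x).
  unfold u0_1 at 1. auto_derive_hyps. unfold u0_2, u0_1. field. lra.
Qed.

Lemma is_derive_u0_2 x : 0 < x < 1 -> is_derive u0_2 x (u0_3 x).
Proof.
  intros Hx. pose proof (is_derive_u0 x Hx). pose proof (is_derive_u0_1 x Hx). pose proof (b_pos x ltac:(lra)).
  pose proof (Db1 x). pose proof (Dc1 x). pose proof (Df1 x).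
  pose proof (Db2 x). pose proof (Dc2 x). pose proof (Df2 x).
  unfold u0_2 at 1. auto_derive_hyps. unfold u0_3, u0_2. field. lra.
Qed.

Lemma is_derive_u0_3 x : 0 < x < 1 -> is_derive u0_3 x (u0_4 x).
Proof.
  intros Hx. pose proof (is_derive_u0 x Hx). pose proof (is_derive_u0_1 x Hx). pose proof (is_derive_u0_2 x Hx). pose proof (b_pos x ltac:(lra)).
  pose proof (Db1 x). pose proof (Dc1 x). pose proof (Df1 x).
  pose proof (Db2 x). pose proof (Dc2 x). pose proof (Df2 x).
  pose proof (Db3 x). pose proof (Dc3 x). pose proof (Df3 x).
  unfold u0_3 at 1. auto_derive_hyps. unfold u0_4, u0_3. field. lra.
Qed.

Definition K0 := M / beta + 1.
Definition K1 := 16 * M * K0 / beta.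
Definition K2 := 16 * M * K1 / beta.
Definition K3 := 16 * M * K2 / beta.
Definition K4 := 16 * M * K3 / beta.

Lemma K_step q : 1 <= q -> q <= 16 * M * q / beta.
Proof.
  intros Hq. apply (Rmult_le_reg_r beta); auto.
  replace (16 * M * q / beta * beta) with (16 * M * q) by (field; lra). nra.
Qed.

Lemma K_chain : 1 <= K0 /\ K0 <= K1 /\ K1 <= K2 /\ K2 <= K3 /\ K3 <= K4.
Proof.
  assert (1 <= K0) by (unfold K0; assert (0 <= M / beta) by (apply Rdiv_le_0_compat; lra); lra).
  assert (K0 <= K1) by (apply K_step; lra).
  assert (K1 <= K2) by (apply K_step; lra).
  assert (K2 <= K3) by (apply K_step; lra).
  assert (K3 <= K4) by (apply K_step; lra).
  tauto.
Qed.

Lemma Rdiv_beta_le S T : S <= T -> S / beta <= T / beta.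
Proof. intros. apply Rmult_le_compat_r; [left; apply Rinv_0_lt_compat|]; lra. Qed.

Lemma u0_continuity t : continuity_pt u0 t.
Proof. apply (is_derive_continuity_pt _ _ (Derive u0 t)). apply Derive_correct, Hu0d. Qed.

Lemma u0_1_lower t : 0 <= t <= 1 -> 0 <= u0 t -> - (M / beta) <= u0_1 t.
Proof.
  intros Ht Hu. pose proof (b_pos t Ht). unfold u0_1.
  replace ((c t * u0 t - f t) / b t) with (c t * u0 t / b t - f t / b t) by (field; lra).
  assert (0 <= c t * u0 t / b t) by (apply Rdiv_le_0_compat; [apply Rmult_le_pos; auto|lra]).
  assert (HH : Rabs (f t / b t) <= M / beta) by (apply Rabs_div_lower_le; auto; specialize (Hbmin t Ht); lra).
  apply Rabs_le_between in HH. lra.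
Qed.

Lemma u0_1_upper t : 0 <= t <= 1 -> u0 t <= 0 -> u0_1 t <= M / beta.
Proof.
  intros Ht Hu. pose proof (b_pos t Ht). unfold u0_1.
  replace ((c t * u0 t - f t) / b t) with (c t * u0 t / b t - f t / b t) by (field; lra).
  assert (c t * u0 t / b t <= 0).
  { unfold Rdiv. assert (c t * u0 t <= 0) by (specialize (Hcpos t Ht); nra).
    assert (0 < / b t) by (apply Rinv_0_lt_compat; lra). nra. }
  assert (HH : Rabs (f t / b t) <= M / beta) by (apply Rabs_div_lower_le; auto; specialize (Hbmin t Ht); lra).
  apply Rabs_le_between in HH. lra.
Qed.

Lemma u0_bound x : 0 <= x <= 1 -> Rabs (u0 x) <= K0.
Proof.
  assert (key : forall s, (s = 1 \/ s = -1) -> forall z, 0 < z <= 1 -> s * u0 z - K0 * (1 - z) <= 0).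
  { intros s Hs z Hz.
    apply (nonpos_propagates_left (fun t => s * u0 t - K0 * (1 - t)) (fun t => s * u0_1 t + K0) z 1); try lra.
    - intros t Ht. apply continuity_pt_minus.
      + apply continuity_pt_mult; [apply continuity_pt_const; intros ??; auto| apply u0_continuity].
      + apply continuity_pt_mult; [apply continuity_pt_const; intros ??; auto|].
        apply continuity_pt_minus; [apply continuity_pt_const; intros ??; auto|apply continuity_pt_id].
    - intros t Ht. pose proof (is_derive_u0 t ltac:(lra)). auto_derive_hyps. ring.
    - simpl. rewrite Hu01. lra.
    - intros t Ht Hq. pose proof K_chain. assert (0 <= K0 * (1 - t)) by (apply Rmult_le_pos; lra).
      simpl in Hq. destruct Hs; subst s.
      + assert (0 <= u0 t) by lra. pose proof (u0_1_lower t ltac:(lra) H1). unfold K0. lra.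
      + assert (u0 t <= 0) by lra. pose proof (u0_1_upper t ltac:(lra) H1). unfold K0. lra. }
  assert (key0 : forall s, (s = 1 \/ s = -1) -> forall z, 0 <= z <= 1 -> s * u0 z - K0 * (1 - z) <= 0).
  { intros s Hs z Hz. destruct (Req_dec z 0) as [E|E]; [|apply key; auto; lra].
    subst z. apply (nonpos_at_0_of_continuity (fun z => s * u0 z - K0 * (1 - z))).
    - apply continuity_pt_minus.
      + apply continuity_pt_mult; [apply continuity_pt_const; intros ??; auto| apply u0_continuity].
      + apply continuity_pt_mult; [apply continuity_pt_const; intros ??; auto|].
        apply continuity_pt_minus; [apply continuity_pt_const; intros ??; auto|apply continuity_pt_id].
    - intros z Hz'. apply key; auto; lra. }
  intros Hx. pose proof (key0 1 (or_introl eq_refl) x Hx). pose proof (key0 (-1) (or_intror eq_refl) x Hx).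
  pose proof K_chain. apply Rabs_le. assert (0 <= K0 * x) by nra. nra.
Qed.

Lemma u0_derivatives_bound x : 0 <= x <= 1 ->
  Rabs (u0_1 x) <= K1 /\ Rabs (u0_2 x) <= K2 /\ Rabs (u0_3 x) <= K3 /\ Rabs (u0_4 x) <= K4.
Proof.
  intros Hx. pose proof K_chain as KF. pose proof (b_pos x Hx).
  assert (Hbb : beta <= b x) by (specialize (Hbmin x Hx); lra).
  pose proof (u0_bound x Hx).
  pose proof (Bb x Hx). pose proof (Bb1 x Hx). pose proof (Bb2 x Hx). pose proof (Bb3 x Hx).
  pose proof (Bc x Hx). pose proof (Bc1 x Hx). pose proof (Bc2 x Hx). pose proof (Bc3 x Hx).
  pose proof (Bf x Hx). pose proof (Bf1 x Hx). pose proof (Bf2 x Hx). pose proof (Bf3 x Hx).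
  assert (B1 : Rabs (u0_1 x) <= K1).
  { unfold u0_1. eapply Rle_trans; [eapply (Rabs_div_lower_le _ _ _ beta); [auto|auto|bound_terms]|].
    unfold K1. apply Rdiv_beta_le. nra. }
  assert (B2 : Rabs (u0_2 x) <= K2).
  { unfold u0_2. eapply Rle_trans; [eapply (Rabs_div_lower_le _ _ _ beta); [auto|auto|bound_terms]|].
    unfold K2. apply Rdiv_beta_le. nra. }
  assert (B3 : Rabs (u0_3 x) <= K3).
  { unfold u0_3. eapply Rle_trans; [eapply (Rabs_div_lower_le _ _ _ beta); [auto|auto|bound_terms]|].
    unfold K3. apply Rdiv_beta_le. nra. }
  assert (B4 : Rabs (u0_4 x) <= K4).
  { unfold u0_4. eapply Rle_trans; [eapply (Rabs_div_lower_le _ _ _ beta); [auto|auto|bound_terms]|].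
    unfold K4. apply Rdiv_beta_le. nra. }
  tauto.
Qed.

Hypothesis Hu0dd : forall x, ex_derive (Derive u0) x.

Lemma Derive2_u0 x : 0 < x < 1 -> Derive (Derive u0) x = u0_2 x.
Proof.
  intros Hx. apply is_derive_unique.
  apply (is_derive_ext_loc u0_1).
  - apply locally_01; auto. intros t Ht. symmetry. apply is_derive_unique. apply is_derive_u0; auto.
  - apply is_derive_u0_1; auto.
Qed.

Lemma Derive_u0_0 : Derive u0 0 = u0_1 0.
Proof.
  apply eq_at_0_of_continuity.
  - apply (is_derive_continuity_pt _ _ (Derive (Derive u0) 0)). apply Derive_correct, Hu0dd.
  - pose proof (b_pos 0 ltac:(lra)). pose proof (Db1 0). pose proof (Dc1 0). pose proof (Df1 0).
    pose proof (Derive_correct _ _ (Hu0d 0)) as HH.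
    apply (is_derive_continuity_pt _ _ (((c1 0 * u0 0 + c 0 * Derive u0 0 - f1 0) * b 0 - (c 0 * u0 0 - f 0) * b1 0) / (b 0) ^ 2)).
    unfold u0_1. auto_derive_hyps. field. lra.
  - intros x Hx. apply is_derive_unique. apply is_derive_u0; auto.
Qed.

Variables (eps : R) (u : R -> R).
Hypotheses (He : 0 < eps < 1) (Hud : forall x, ex_derive u x) (Hudd : forall x, ex_derive (Derive u) x)
  (Hode : forall x, 0 < x < 1 -> - eps * Derive_n u 2 x - b x * Derive u x + c x * u x = f x)
  (Hu00 : u 0 = 0) (Hu1 : u 1 = 0).

Definition layer x := exp (- beta * x / eps).

Lemma is_derive_layer x : is_derive layer x (- (beta / eps) * layer x).
Proof. unfold layer. auto_derive; auto. unfold Rdiv. ring. Qed.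

Lemma layer_pos x : 0 < layer x.
Proof. apply exp_pos. Qed.

Lemma layer_le_1 x : 0 <= x -> layer x <= 1.
Proof.
  intros Hx. unfold layer. rewrite <- exp_0.
  assert (- beta * x / eps <= 0).
  { assert (0 <= beta * x / eps) by (apply Rdiv_le_0_compat; nra).
    replace (- beta * x / eps) with (- (beta * x / eps)) by (field; lra). lra. }
  destruct (Req_dec (- beta * x / eps) 0) as [E|E]; [rewrite E; lra|].
  left. apply exp_increasing. lra.
Qed.

Lemma layer_0 : layer 0 = 1.
Proof. unfold layer. replace (- beta * 0 / eps) with 0 by (field; lra). apply exp_0. Qed.

Lemma Derive_u_correct x : is_derive u x (Derive u x).
Proof. apply Derive_correct, Hud. Qed.
Lemma Derive_Du_correct x : is_derive (Derive u) x (Derive (Derive u) x).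
Proof. apply Derive_correct, Hudd. Qed.
Lemma Derive_u0_correct x : is_derive u0 x (Derive u0 x).
Proof. apply Derive_correct, Hu0d. Qed.
Lemma Derive_Du0_correct x : is_derive (Derive u0) x (Derive (Derive u0) x).
Proof. apply Derive_correct, Hu0dd. Qed.

Lemma ode_u x : 0 < x < 1 -> eps * Derive (Derive u) x = - b x * Derive u x + c x * u x - f x.
Proof. intros Hx. specialize (Hode x Hx). change (Derive_n u 2 x) with (Derive (Derive u) x) in Hode. lra. Qed.

Definition Aw := K2 / beta + 1.

Lemma ode_u_minus_u0 x : 0 < x < 1 ->
  - eps * (Derive (Derive u) x - Derive (Derive u0) x) - b x * (Derive u x - Derive u0 x)
  + c x * (u x - u0 x) = eps * u0_2 x.
Proof. intros Hx. rewrite (Derive2_u0 x Hx). pose proof (ode_u x Hx). pose proof (Hode0 x Hx). lra. Qed.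

Lemma u_minus_u0_bound : forall x, 0 <= x <= 1 -> Rabs (u x - u0 x) <= 2 * Aw * eps + K0 * layer x.
Proof.
  pose proof K_chain as KF.
  assert (Awp : 1 <= Aw) by (unfold Aw; assert (0 <= K2 / beta) by (apply Rdiv_le_0_compat; lra); lra).
  assert (HA : beta * Aw > K2) by (unfold Aw; replace (beta * (K2 / beta + 1)) with (K2 + beta) by (field; lra); lra).
  assert (B : forall x, 0 <= x <= 1 -> Rabs (u x - u0 x) <= Aw * eps * (2 - x) + K0 * layer x).
  { apply (barrier_bound eps b c (fun x => u x - u0 x) (fun x => Derive u x - Derive u0 x)
      (fun x => Derive (Derive u) x - Derive (Derive u0) x)
      (fun x => Aw * eps * (2 - x) + K0 * layer x) (fun x => - Aw * eps + K0 * (- (beta / eps) * layer x))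
      (fun x => K0 * ((beta / eps) ^ 2 * layer x))); try lra.
    - intros x Hx; apply Hcpos; lra.
    - intros x _. pose proof (Derive_u_correct x). pose proof (Derive_u0_correct x).
      apply (is_derive_continuity_pt _ _ (Derive u x - Derive u0 x)). auto_derive_hyps. ring.
    - intros x _. pose proof (is_derive_layer x).
      apply (is_derive_continuity_pt _ _ (- Aw * eps + K0 * (- (beta / eps) * layer x))). auto_derive_hyps. ring.
    - intros x _. pose proof (Derive_u_correct x). pose proof (Derive_u0_correct x). auto_derive_hyps. ring.
    - intros x _. pose proof (Derive_Du_correct x). pose proof (Derive_Du0_correct x). auto_derive_hyps. ring.
    - intros x _. pose proof (is_derive_layer x). auto_derive_hyps. ring.
    - intros x _. pose proof (is_derive_layer x). auto_derive_hyps. field. lra.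
    - intros x Hx. cbv beta. rewrite ode_u_minus_u0 by auto.
      replace (- eps * (K0 * ((beta / eps) ^ 2 * layer x)) - b x * (- Aw * eps + K0 * (- (beta / eps) * layer x))
        + c x * (Aw * eps * (2 - x) + K0 * layer x)) with (Aw * eps * b x + K0 * (beta / eps) * layer x * (b x - beta)
        + c x * (Aw * eps * (2 - x) + K0 * layer x)) by (field; lra).
      pose proof (u0_derivatives_bound x ltac:(lra)) as [_ [PB2 _]].
      pose proof (Hbmin x ltac:(lra)). pose proof (Hcpos x ltac:(lra)). pose proof (layer_pos x).
      assert (Rabs (eps * u0_2 x) <= eps * K2) by (rewrite Rabs_mult, Rabs_pos_eq by lra; apply Rmult_le_compat_l; lra).
      assert (Aw * eps * b x >= Aw * eps * beta + Aw * eps * d) by (assert (0 < Aw * eps) by nra; nra).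
      assert (0 <= K0 * (beta / eps) * layer x * (b x - beta)).
      { apply Rmult_le_pos; [apply Rmult_le_pos; [apply Rmult_le_pos; [lra|apply Rdiv_le_0_compat; lra]|lra]|lra]. }
      assert (0 <= c x * (Aw * eps * (2 - x) + K0 * layer x)).
      { apply Rmult_le_pos; [lra|]. assert (0 <= Aw * eps * (2 - x)) by (apply Rmult_le_pos; nra). nra. }
      assert (Aw * eps * beta > eps * K2) by nra.
      assert (0 < Aw * eps * d) by (apply Rmult_lt_0_compat; nra).
      lra.
    - cbv beta. rewrite Hu00, layer_0. pose proof (u0_bound 0 ltac:(lra)).
      replace (0 - u0 0) with (- u0 0) by ring. rewrite Rabs_Ropp. assert (0 < Aw * eps) by nra. lra.
    - cbv beta. rewrite Hu1, Hu01, Rminus_0_r, Rabs_R0. pose proof (layer_pos 1).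
      assert (0 < Aw * eps) by nra. nra. }
  intros x Hx. specialize (B x Hx). assert (0 <= Aw * eps * x) by (apply Rmult_le_pos; nra). lra.
Qed.

Definition Ku := M / beta + 1.

Lemma u_bound : forall x, 0 <= x <= 1 -> Rabs (u x) <= Ku * (1 - x).
Proof.
  assert (Kup : 1 <= Ku) by (unfold Ku; assert (0 <= M / beta) by (apply Rdiv_le_0_compat; lra); lra).
  apply (barrier_bound eps b c u (Derive u) (Derive (Derive u)) (fun x => Ku * (1 - x))
    (fun _ => - Ku) (fun _ => 0)); try lra.
  - intros x Hx; apply Hcpos; lra.
  - intros x _. apply (is_derive_continuity_pt _ _ (Derive u x)), Derive_u_correct.
  - intros x _. apply (is_derive_continuity_pt _ _ (- Ku)). auto_derive; auto. ring.
  - intros x _. apply Derive_u_correct.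
  - intros x _. apply Derive_Du_correct.
  - intros x _. auto_derive; auto. ring.
  - intros x _. auto_derive; auto.
  - intros x Hx. cbv beta.
    replace (- eps * Derive (Derive u) x - b x * Derive u x + c x * u x) with (f x) by (pose proof (ode_u x Hx); lra).
    pose proof (Bf x ltac:(lra)). pose proof (Hbmin x ltac:(lra)). pose proof (Hcpos x ltac:(lra)).
    assert (Ku * b x >= Ku * beta + Ku * d) by nra.
    assert (Ku * beta = M + beta) by (unfold Ku; field; lra).
    assert (0 <= c x * (Ku * (1 - x))) by (apply Rmult_le_pos; nra).
    nra.
  - cbv beta. rewrite Hu00, Rabs_R0. lra.
  - cbv beta. rewrite Hu1, Rabs_R0. lra.
Qed.

Lemma Derive_u_1_bound : Rabs (Derive u 1) <= Ku.
Proof.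
  apply Rabs_le. split.
  - destruct (Rle_dec (- Ku) (Derive u 1)) as [|Hn]; [auto|exfalso].
    destruct (is_derive_neg_left (fun t => u t - Ku * (1 - t)) 1 (Derive u 1 + Ku)) as [dl [Hdl P]].
    { pose proof (Derive_u_correct 1). auto_derive_hyps. ring. } { lra. }
    pose proof (Rmin_r dl 1). pose proof (Rmin_l dl 1). assert (0 < Rmin dl 1) by (apply Rmin_pos; lra).
    set (s := 1 - Rmin dl 1 / 2).
    specialize (P s ltac:(unfold s; lra)). simpl in P. rewrite Hu1 in P.
    pose proof (u_bound s ltac:(unfold s; lra)) as U. apply Rabs_le_between in U. lra.
  - destruct (Rle_dec (Derive u 1) Ku) as [|Hn]; [auto|exfalso].
    destruct (is_derive_pos_left (fun t => u t + Ku * (1 - t)) 1 (Derive u 1 - Ku)) as [dl [Hdl P]].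
    { pose proof (Derive_u_correct 1). auto_derive_hyps. ring. } { lra. }
    pose proof (Rmin_r dl 1). pose proof (Rmin_l dl 1). assert (0 < Rmin dl 1) by (apply Rmin_pos; lra).
    set (s := 1 - Rmin dl 1 / 2).
    specialize (P s ltac:(unfold s; lra)). simpl in P. rewrite Hu1 in P.
    pose proof (u_bound s ltac:(unfold s; lra)) as U. apply Rabs_le_between in U. lra.
Qed.

Definition Gm := 2 * M * (2 * Aw + K0).
Definition Cpsi := Ku + Gm * (1 + 1 / beta).

(* Integrating the equation once: the derivative of the flux is (c + b') (u - u0). *)
Definition flux x := eps * Derive u x + b x * u x - b x * u0 x.

Lemma is_derive_flux x : 0 < x < 1 -> is_derive flux x ((c x + b1 x) * (u x - u0 x)).
Proof.
  intros Hx. pose proof (Derive_u_correct x). pose proof (Derive_Du_correct x).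
  pose proof (is_derive_u0 x Hx). pose proof (Db1 x). pose proof (b_pos x ltac:(lra)).
  assert (Derive u0 x = u0_1 x) by (apply is_derive_unique; auto).
  assert (EU2 : Derive (Derive u) x = (- b x * Derive u x + c x * u x - f x) / eps)
    by (rewrite <- (ode_u x Hx); field; lra).
  unfold flux. auto_derive_hyps. rewrite EU2. replace (Derive u0 x) with (u0_1 x). unfold u0_1. field. lra.
Qed.

Lemma flux_continuity x : continuity_pt flux x.
Proof.
  pose proof (Derive_u_correct x). pose proof (Derive_Du_correct x). pose proof (Derive_u0_correct x).
  pose proof (Db1 x). unfold flux.
  apply (is_derive_continuity_pt _ _ (eps * Derive (Derive u) x + (b1 x * u x + b x * Derive u x)
    - (b1 x * u0 x + b x * Derive u0 x))). auto_derive_hyps. ring.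
Qed.

Lemma flux_increment_bound : Rabs (flux 1 - flux 0) <= eps * (Gm * (1 + 1 / beta)).
Proof.
  pose proof K_chain.
  assert (Awp : 1 <= Aw) by (unfold Aw; assert (0 <= K2 / beta) by (apply Rdiv_le_0_compat; lra); lra).
  assert (Gmp : 0 <= Gm) by (unfold Gm; apply Rmult_le_pos; lra).
  eapply Rle_trans; [apply (Rabs_increment_le flux (fun x => (c x + b1 x) * (u x - u0 x))
     (fun x => Gm * (eps * x - eps / beta * layer x)) (fun x => Gm * (eps + layer x)) 0 1); try lra|].
  - intros x Hx. apply is_derive_flux; auto.
  - intros x Hx. pose proof (is_derive_layer x). auto_derive_hyps. field. lra.
  - intros x Hx. apply flux_continuity.
  - intros x Hx. pose proof (is_derive_layer x). apply (is_derive_continuity_pt _ _ (Gm * (eps + layer x))).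
    auto_derive_hyps. field. lra.
  - intros x Hx. pose proof (u_minus_u0_bound x ltac:(lra)) as W. rewrite Rabs_mult.
    pose proof (Bc x ltac:(lra)). pose proof (Bb1 x ltac:(lra)).
    assert (Rabs (c x + b1 x) <= 2 * M) by (eapply Rle_trans; [apply Rabs_triang|lra]).
    apply Rle_trans with (2 * M * (2 * Aw * eps + K0 * layer x)).
    + apply Rmult_le_compat; auto; apply Rabs_pos.
    + unfold Gm. pose proof (layer_pos x). assert (layer x <= 1) by (apply layer_le_1; lra).
      assert (2 * Aw * eps + K0 * layer x <= (2 * Aw + K0) * (eps + layer x)) by nra. nra.
  - rewrite layer_0. pose proof (layer_pos 1).
    assert (0 <= Gm * (eps / beta * layer 1)).
    { apply Rmult_le_pos; [lra|apply Rmult_le_pos; [apply Rdiv_le_0_compat|]; lra]. }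
    replace (Gm * (eps * 1 - eps / beta * layer 1) - Gm * (eps * 0 - eps / beta * 1)) with
      (eps * (Gm * (1 + 1 / beta)) - Gm * (eps / beta * layer 1)) by (field; lra). lra.
Qed.

Lemma flux_0_bound : Rabs (eps * Derive u 0 - b 0 * u0 0) <= eps * Cpsi.
Proof.
  assert (E0 : flux 0 = eps * Derive u 0 - b 0 * u0 0) by (unfold flux; rewrite Hu00; ring).
  assert (E1 : flux 1 = eps * Derive u 1) by (unfold flux; rewrite Hu1, Hu01; ring).
  pose proof flux_increment_bound. pose proof Derive_u_1_bound.
  assert (Rabs (eps * Derive u 1) <= eps * Ku) by (rewrite Rabs_mult, Rabs_pos_eq by lra; apply Rmult_le_compat_l; lra).
  rewrite <- E0. replace (flux 0) with (flux 1 - (flux 1 - flux 0)) by ring.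
  eapply Rle_trans; [apply Rabs_minus_le; [rewrite E1|]; eassumption|].
  unfold Cpsi. lra.
Qed.

Definition v_coef := - (eps * Derive u 0 / b 0).
Definition layer0 x := exp (- b 0 * x / eps).
Definition v x := v_coef * layer0 x.
Definition y x := u x - u0 x - v x.
(* L v = v_coef * v_res. *)
Definition v_res x := layer0 x * ((b x - b 0) * b 0 / eps + c x).
Definition v_res1 x := layer0 x * (- (b 0 / eps) * ((b x - b 0) * b 0 / eps + c x) + (b1 x * b 0 / eps + c1 x)).
Definition v_res2 x := layer0 x * ((b 0 / eps) ^ 2 * ((b x - b 0) * b 0 / eps + c x)
   - 2 * (b 0 / eps) * (b1 x * b 0 / eps + c1 x) + (b2 x * b 0 / eps + c2 x)).
Definition g x := eps * u0_2 x - v_coef * v_res x.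
Definition g1 x := eps * u0_3 x - v_coef * v_res1 x.
Definition g2 x := eps * u0_4 x - v_coef * v_res2 x.
Definition y1 x := Derive u x - Derive u0 x - v_coef * (- (b 0 / eps)) * layer0 x.
Definition y2 x := Derive (Derive u) x - Derive (Derive u0) x - v_coef * (b 0 / eps) ^ 2 * layer0 x.
(* On (0,1), y3 and y4 are the derivatives of y2 and y3, obtained by differentiating L y = g. *)
Definition y3 x := (- b1 x * y1 x - b x * y2 x + c1 x * y x + c x * y1 x - g1 x) / eps.
Definition y4 x := (- b2 x * y1 x - 2 * b1 x * y2 x - b x * y3 x + c2 x * y x + 2 * c1 x * y1 x
   + c x * y2 x - g2 x) / eps.

Lemma is_derive_layer0 x : is_derive layer0 x (- (b 0 / eps) * layer0 x).
Proof. unfold layer0. auto_derive; auto. unfold Rdiv. ring. Qed.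

Lemma is_derive_y x : is_derive y x (y1 x).
Proof.
  pose proof (Derive_u_correct x). pose proof (Derive_u0_correct x). pose proof (is_derive_layer0 x).
  unfold y, v. auto_derive_hyps. unfold y1. ring.
Qed.

Lemma is_derive_y1 x : is_derive y1 x (y2 x).
Proof.
  pose proof (Derive_Du_correct x). pose proof (Derive_Du0_correct x). pose proof (is_derive_layer0 x).
  unfold y1. auto_derive_hyps. unfold y2. field. lra.
Qed.

Lemma is_derive_v_res x : is_derive v_res x (v_res1 x).
Proof.
  pose proof (is_derive_layer0 x). pose proof (Db1 x). pose proof (Dc1 x).
  unfold v_res. auto_derive_hyps. unfold v_res1. field. lra.
Qed.

Lemma is_derive_v_res1 x : is_derive v_res1 x (v_res2 x).
Proof.
  pose proof (is_derive_layer0 x). pose proof (Db1 x). pose proof (Dc1 x). pose proof (Db2 x). pose proof (Dc2 x).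
  unfold v_res1. auto_derive_hyps. unfold v_res2. field. lra.
Qed.

Lemma is_derive_g x : 0 < x < 1 -> is_derive g x (g1 x).
Proof. intros Hx. pose proof (is_derive_u0_2 x Hx). pose proof (is_derive_v_res x). unfold g. auto_derive_hyps. unfold g1. ring. Qed.

Lemma is_derive_g1 x : 0 < x < 1 -> is_derive g1 x (g2 x).
Proof. intros Hx. pose proof (is_derive_u0_3 x Hx). pose proof (is_derive_v_res1 x). unfold g1. auto_derive_hyps. unfold g2. ring. Qed.

Lemma ode_y x : 0 < x < 1 -> eps * y2 x = - b x * y1 x + c x * y x - g x.
Proof.
  intros Hx. pose proof (ode_u x Hx) as O1. pose proof (Derive2_u0 x Hx) as O2. pose proof (Hode0 x Hx) as O3.
  pose proof (b_pos x ltac:(lra)) as Hb0.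
  assert (EV1 : Derive u0 x = (c x * u0 x - f x) / b x) by (apply (Rmult_eq_reg_l (b x)); [|lra]; field_simplify; lra).
  assert (EU2 : Derive (Derive u) x = (- b x * Derive u x + c x * u x - f x) / eps) by (rewrite <- O1; field; lra).
  unfold y2, y1, y, v, g, v_res. rewrite EU2, O2, EV1.
  unfold u0_2, u0_1. field. lra.
Qed.

Lemma is_derive_y2 x : 0 < x < 1 -> is_derive y2 x (y3 x).
Proof.
  intros Hx.
  apply (is_derive_ext_loc (fun t => (- b t * y1 t + c t * y t - g t) / eps)).
  - apply locally_01; auto. intros t Ht. change ((- b t * y1 t + c t * y t - g t) / eps = y2 t). rewrite <- ode_y by auto. field. lra.
  - pose proof (is_derive_y x). pose proof (is_derive_y1 x). pose proof (is_derive_g x Hx). pose proof (Db1 x). pose proof (Dc1 x).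
    auto_derive_hyps. unfold y3. field. lra.
Qed.

Lemma is_derive_y3 x : 0 < x < 1 -> is_derive y3 x (y4 x).
Proof.
  intros Hx. pose proof (is_derive_y x). pose proof (is_derive_y1 x). pose proof (is_derive_y2 x Hx). pose proof (is_derive_g1 x Hx).
  pose proof (Db1 x). pose proof (Dc1 x). pose proof (Db2 x). pose proof (Dc2 x).
  unfold y3 at 1. auto_derive_hyps. unfold y4. field. lra.
Qed.

Lemma b_increment_bound x : 0 <= x <= 1 -> Rabs (b x - b 0) <= M * x.
Proof.
  intros Hx. replace (M * x) with (M * x - M * 0) by ring.
  apply (Rabs_increment_le b b1 (fun t => M * t) (fun _ => M) 0 x); try lra.
  - intros; apply Db1.
  - intros t Ht. auto_derive_hyps. ring.
  - intros t Ht. apply (is_derive_continuity_pt _ _ (b1 t)); apply Db1.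
  - intros t Ht. apply (is_derive_continuity_pt _ _ M). auto_derive_hyps. ring.
  - intros t Ht. apply Bb1; lra.
Qed.

Lemma mul_exp_neg_le_1 z : 0 <= z -> z * exp (- z) <= 1.
Proof.
  intros Hz. pose proof (exp_ge_taylor1 z Hz). rewrite exp_Ropp.
  apply (Rmult_le_reg_r (exp z)); [apply exp_pos|].
  rewrite Rmult_assoc, Rinv_l by (apply Rgt_not_eq, exp_pos). lra.
Qed.

Lemma layer0_scaled_le x : 0 <= x <= 1 -> layer0 x * (x / eps) <= layer x / d.
Proof.
  intros Hx. unfold layer0, layer. specialize (Hbmin 0 ltac:(lra)).
  assert (A : exp (- b 0 * x / eps) <= exp (- beta * x / eps) * exp (- (d * x / eps))).
  { rewrite <- exp_plus. destruct (Req_dec (- b 0 * x / eps) (- beta * x / eps + - (d * x / eps))) as [E|E];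
      [rewrite E; lra|left; apply exp_increasing].
    assert (0 <= (b 0 - beta - d) * x / eps) by (apply Rdiv_le_0_compat; [apply Rmult_le_pos|]; lra).
    assert (- b 0 * x / eps <= - beta * x / eps + - (d * x / eps)).
    { replace (- beta * x / eps + - (d * x / eps)) with (- b 0 * x / eps + (b 0 - beta - d) * x / eps) by (field; lra). lra. }
    lra. }
  assert (Z := mul_exp_neg_le_1 (d * x / eps) ltac:(apply Rdiv_le_0_compat; [apply Rmult_le_pos|]; lra)).
  assert (0 <= x / eps) by (apply Rdiv_le_0_compat; lra).
  apply Rle_trans with (exp (- beta * x / eps) * exp (- (d * x / eps)) * (x / eps)).
  - apply Rmult_le_compat_r; auto.
  - replace (exp (- beta * x / eps) * exp (- (d * x / eps)) * (x / eps)) with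
      (exp (- beta * x / eps) / d * (d * x / eps * exp (- (d * x / eps)))) by (field; lra).
    pose proof (exp_pos (- beta * x / eps)).
    replace (exp (- beta * x / eps) / d) with (exp (- beta * x / eps) / d * 1) at 2 by ring.
    apply Rmult_le_compat_l; auto. apply Rdiv_le_0_compat; lra.
Qed.

Lemma layer0_le_layer x : 0 <= x <= 1 -> layer0 x <= layer x.
Proof.
  intros Hx. unfold layer0, layer. specialize (Hbmin 0 ltac:(lra)).
  assert (- b 0 * x / eps <= - beta * x / eps).
  { assert (0 <= (b 0 - beta) * x / eps) by (apply Rdiv_le_0_compat; [apply Rmult_le_pos|]; lra).
    replace (- beta * x / eps) with (- b 0 * x / eps + (b 0 - beta) * x / eps) by (field; lra). lra. }
  destruct (Req_dec (- b 0 * x / eps) (- beta * x / eps)) as [E|E]; [rewrite E; lra|left; apply exp_increasing; lra].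
Qed.

Definition CL0 := M * M / d + M.
Definition CL1 := M * CL0 + M * M + M.
Definition CL2 := M * M * CL0 + 2 * M * (M * M + M) + M * M + M.

Lemma v_res_core_bound x : 0 <= x <= 1 -> layer0 x * Rabs ((b x - b 0) * b 0 / eps + c x) <= layer x * CL0.
Proof.
  intros Hx. pose proof (layer0_scaled_le x Hx). pose proof (layer0_le_layer x Hx). pose proof (b_increment_bound x Hx).
  pose proof (Bb 0 ltac:(lra)). pose proof (Bc x Hx).
  assert (E0p : 0 < layer0 x) by apply exp_pos.
  assert (Rabs ((b x - b 0) * b 0 / eps) <= M * M * (x / eps)).
  { unfold Rdiv. rewrite !Rabs_mult, Rabs_inv, (Rabs_pos_eq eps) by lra.
    replace (M * M * (x * / eps)) with ((M * x) * M * / eps) by ring.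
    apply Rmult_le_compat_r; [left; apply Rinv_0_lt_compat; lra|].
    apply Rmult_le_compat; auto; apply Rabs_pos. }
  assert (Rabs ((b x - b 0) * b 0 / eps + c x) <= M * M * (x / eps) + M) by (eapply Rle_trans; [apply Rabs_triang|lra]).
  unfold CL0.
  apply Rle_trans with (layer0 x * (M * M * (x / eps) + M)).
  - apply Rmult_le_compat_l; lra.
  - assert (layer0 x * (M * M * (x / eps)) <= layer x * (M * M / d)).
    { replace (layer0 x * (M * M * (x / eps))) with (M * M * (layer0 x * (x / eps))) by ring.
      replace (layer x * (M * M / d)) with (M * M * (layer x / d)) by (field; lra).
      apply Rmult_le_compat_l; nra. }
    assert (layer0 x * M <= layer x * M) by (apply Rmult_le_compat_r; lra). nra.
Qed.

Lemma v_res_bound x : 0 <= x <= 1 -> Rabs (v_res x) <= CL0 * layer x.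
Proof.
  intros Hx. pose proof (v_res_core_bound x Hx). assert (0 < layer0 x) by apply exp_pos.
  unfold v_res. rewrite Rabs_mult, (Rabs_pos_eq (layer0 x)) by lra. lra.
Qed.

Lemma v_res1_bound x : 0 <= x <= 1 -> Rabs (v_res1 x) <= CL1 * layer x / eps.
Proof.
  intros Hx. pose proof (v_res_core_bound x Hx) as LC. pose proof (layer0_le_layer x Hx).
  assert (E0p : 0 < layer0 x) by apply exp_pos. pose proof (layer_pos x).
  pose proof (Rabs_mult_div_plus_le (b1 x) (b 0) (c1 x) M eps ltac:(lra) ltac:(lra) (Bb1 x Hx) (Bb 0 ltac:(lra)) (Bc1 x Hx)).
  assert (B0 : Rabs (b 0 / eps) <= M / eps).
  { unfold Rdiv. rewrite Rabs_mult, Rabs_inv, (Rabs_pos_eq eps) by lra.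
    apply Rmult_le_compat_r; [left; apply Rinv_0_lt_compat; lra|apply Bb; lra]. }
  set (T := (b x - b 0) * b 0 / eps + c x) in *.
  unfold v_res1. fold T. rewrite Rabs_mult, (Rabs_pos_eq (layer0 x)) by lra.
  apply Rle_trans with (layer0 x * (M / eps * Rabs T + (M * M + M) / eps)).
  - apply Rmult_le_compat_l; [lra|]. eapply Rle_trans; [apply Rabs_triang|].
    rewrite Rabs_mult, Rabs_Ropp. apply Rplus_le_compat; auto.
    apply Rmult_le_compat_r; auto; apply Rabs_pos.
  - unfold CL1. replace (layer0 x * (M / eps * Rabs T + (M * M + M) / eps)) with
      ((M * (layer0 x * Rabs T) + layer0 x * (M * M + M)) / eps) by (field; lra).
    replace ((M * CL0 + M * M + M) * layer x / eps) with ((M * (layer x * CL0) + layer x * (M * M + M)) / eps) by (field; lra).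
    unfold Rdiv. apply Rmult_le_compat_r; [left; apply Rinv_0_lt_compat; lra|].
    apply Rplus_le_compat; [apply Rmult_le_compat_l; lra|apply Rmult_le_compat_r; nra].
Qed.

Lemma v_res2_bound x : 0 <= x <= 1 -> Rabs (v_res2 x) <= CL2 * layer x / eps ^ 2.
Proof.
  intros Hx. pose proof (v_res_core_bound x Hx) as LC. pose proof (layer0_le_layer x Hx).
  assert (E0p : 0 < layer0 x) by apply exp_pos. pose proof (layer_pos x).
  pose proof (Rabs_mult_div_plus_le (b1 x) (b 0) (c1 x) M eps ltac:(lra) ltac:(lra) (Bb1 x Hx) (Bb 0 ltac:(lra)) (Bc1 x Hx)).
  pose proof (Rabs_mult_div_plus_le (b2 x) (b 0) (c2 x) M eps ltac:(lra) ltac:(lra) (Bb2 x Hx) (Bb 0 ltac:(lra)) (Bc2 x Hx)).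
  assert (B0 : Rabs (b 0 / eps) <= M / eps).
  { unfold Rdiv. rewrite Rabs_mult, Rabs_inv, (Rabs_pos_eq eps) by lra.
    apply Rmult_le_compat_r; [left; apply Rinv_0_lt_compat; lra|apply Bb; lra]. }
  set (T := (b x - b 0) * b 0 / eps + c x) in *.
  unfold v_res2. fold T. rewrite Rabs_mult, (Rabs_pos_eq (layer0 x)) by lra.
  apply Rle_trans with (layer0 x * ((M / eps) ^ 2 * Rabs T + 2 * (M / eps) * ((M * M + M) / eps) + (M * M + M) / eps)).
  - apply Rmult_le_compat_l; [lra|]. eapply Rle_trans; [apply Rabs_triang|].
    apply Rplus_le_compat; auto.
    unfold Rminus. eapply Rle_trans; [apply Rabs_triang|]. rewrite Rabs_Ropp.
    apply Rplus_le_compat.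
    + rewrite Rabs_mult, <- RPow_abs. apply Rmult_le_compat_r; [apply Rabs_pos|].
      apply pow_incr. split; [apply Rabs_pos|auto].
    + rewrite !Rabs_mult, (Rabs_pos_eq 2) by lra.
      apply Rmult_le_compat; [apply Rmult_le_pos; [lra|apply Rabs_pos]|apply Rabs_pos|apply Rmult_le_compat_l; lra|auto].
  - unfold CL2.
    replace (layer0 x * ((M / eps) ^ 2 * Rabs T + 2 * (M / eps) * ((M * M + M) / eps) + (M * M + M) / eps)) with
      ((M * M * (layer0 x * Rabs T) + 2 * M * (M * M + M) * layer0 x + (M * M + M) * layer0 x * eps) / eps ^ 2) by (field; lra).
    replace ((M * M * CL0 + 2 * M * (M * M + M) + M * M + M) * layer x / eps ^ 2) with
      ((M * M * (layer x * CL0) + 2 * M * (M * M + M) * layer x + (M * M + M) * layer x) / eps ^ 2) by (field; lra).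
    unfold Rdiv. apply Rmult_le_compat_r; [left; apply Rinv_0_lt_compat, pow_lt; lra|].
    assert (M * M * (layer0 x * Rabs T) <= M * M * (layer x * CL0)) by (apply Rmult_le_compat_l; nra).
    assert (2 * M * (M * M + M) * layer0 x <= 2 * M * (M * M + M) * layer x) by (apply Rmult_le_compat_l; nra).
    assert (0 <= (M * M + M) * layer0 x) by (apply Rmult_le_pos; nra).
    assert ((M * M + M) * layer0 x * eps <= (M * M + M) * layer0 x) by (rewrite <- (Rmult_1_r ((M * M + M) * layer0 x)) at 2; apply Rmult_le_compat_l; lra).
    assert ((M * M + M) * layer0 x <= (M * M + M) * layer x) by (apply Rmult_le_compat_l; nra).
    lra.
Qed.

Definition Kvm := (Cpsi + M * K0) / beta.

Lemma v_coef_bound : Rabs v_coef <= Kvm.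
Proof.
  pose proof flux_0_bound as P. pose proof (u0_bound 0 ltac:(lra)) as U. pose proof (Bb 0 ltac:(lra)).
  unfold v_coef, Kvm. rewrite Rabs_Ropp. apply Rabs_div_lower_le; auto. specialize (Hbmin 0 ltac:(lra)); lra.
  replace (eps * Derive u 0) with ((eps * Derive u 0 - b 0 * u0 0) + b 0 * u0 0) by ring.
  eapply Rle_trans; [apply Rabs_plus_le; [exact P|apply Rabs_mult_le; eassumption]|].
  assert (0 <= Cpsi).
  { pose proof (Rabs_pos (eps * Derive u 0 - b 0 * u0 0)). assert (0 <= eps * Cpsi) by lra. nra. }
  nra.
Qed.

Lemma y_0_bound : Rabs (y 0) <= eps * Cpsi / beta.
Proof.
  pose proof flux_0_bound as P. pose proof (b_pos 0 ltac:(lra)).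
  assert (E : y 0 = (eps * Derive u 0 - b 0 * u0 0) / b 0).
  { unfold y, v, v_coef, layer0. rewrite Hu00. replace (- b 0 * 0 / eps) with 0 by (field; lra). rewrite exp_0. field. lra. }
  rewrite E. apply Rabs_div_lower_le; auto. specialize (Hbmin 0 ltac:(lra)); lra.
Qed.

Lemma y_1_bound : Rabs (y 1) <= Kvm * eps / beta.
Proof.
  pose proof v_coef_bound. pose proof (b_pos 1 ltac:(lra)) as B.
  assert (E : y 1 = - (v_coef * layer0 1)) by (unfold y, v; rewrite Hu1, Hu01; ring).
  rewrite E, Rabs_Ropp, Rabs_mult, (Rabs_pos_eq (layer0 1)) by (left; apply exp_pos).
  assert (H0 : beta + d <= b 0) by (apply Hbmin; lra).
  assert (layer0 1 <= eps / beta).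
  { unfold layer0. replace (- b 0 * 1 / eps) with (- (b 0 / eps)) by (field; lra).
    assert (0 < b 0 / eps) by (apply Rdiv_lt_0_compat; lra).
    pose proof (mul_exp_neg_le_1 (b 0 / eps) ltac:(lra)).
    apply (Rmult_le_reg_l (b 0 / eps)); auto.
    replace (b 0 / eps * (eps / beta)) with (b 0 / beta) by (field; lra).
    assert (1 <= b 0 / beta) by (apply (Rmult_le_reg_r beta); auto; unfold Rdiv; rewrite Rmult_assoc, Rinv_l by lra; lra).
    lra. }
  assert (0 <= Rabs v_coef) by apply Rabs_pos.
  replace (Kvm * eps / beta) with (Kvm * (eps / beta)) by (field; lra).
  apply Rmult_le_compat; auto. left; apply exp_pos.
Qed.

Definition A0 := (K2 + Kvm * CL0 / d + Cpsi + Kvm) / beta + 1.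

Lemma constants_nonneg : 0 <= Cpsi /\ 0 <= Kvm /\ 0 <= CL0 /\ 0 <= CL1 /\ 0 <= CL2 /\ 1 <= A0.
Proof.
  assert (KF := K_chain).
  assert (Awp : 1 <= Aw) by (unfold Aw; assert (0 <= K2/beta) by (apply Rdiv_le_0_compat; lra); lra).
  assert (0 <= Cpsi).
  { unfold Cpsi, Gm, Ku. assert (0 <= M / beta) by (apply Rdiv_le_0_compat; lra).
    assert (0 <= 1 / beta) by (apply Rdiv_le_0_compat; lra).
    assert (0 <= 2 * M * (2 * Aw + K0)) by (apply Rmult_le_pos; lra). nra. }
  assert (0 <= Kvm) by (unfold Kvm; apply Rdiv_le_0_compat; nra).
  assert (0 <= CL0) by (unfold CL0; assert (0 <= M * M / d) by (apply Rdiv_le_0_compat; nra); nra).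
  assert (0 <= CL1) by (unfold CL1; nra).
  assert (0 <= CL2) by (unfold CL2; assert (0 <= M * M) by nra; nra).
  assert (1 <= A0).
  { unfold A0. assert (0 <= Kvm * CL0 / d) by (apply Rdiv_le_0_compat; nra).
    assert (0 <= (K2 + Kvm * CL0 / d + Cpsi + Kvm) / beta) by (apply Rdiv_le_0_compat; lra). lra. }
  tauto.
Qed.

Lemma g_bound x : 0 <= x <= 1 -> Rabs (g x) <= K2 * eps + Kvm * CL0 * layer x.
Proof.
  intros Hx. pose proof (u0_derivatives_bound x Hx) as [_ [PB _]]. pose proof (v_res_bound x Hx) as LB.
  pose proof v_coef_bound as KB. unfold g.
  eapply Rle_trans; [eapply Rabs_minus_le; [eapply Rabs_mult_le; [apply Rabs_nonneg_le; lra|exact PB]|eapply Rabs_mult_le; [exact KB|exact LB]]|].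
  nra.
Qed.

Lemma g1_bound t : 0 <= t <= 1 -> Rabs (g1 t) <= K3 * eps + Kvm * CL1 * (layer t / eps).
Proof.
  intros Ht. pose proof (u0_derivatives_bound t Ht) as [_ [_ [PB _]]]. pose proof (v_res1_bound t Ht) as LB.
  pose proof v_coef_bound as KB. destruct constants_nonneg as [Cp [Kp _]]. unfold g1.
  eapply Rle_trans; [eapply Rabs_minus_le; [eapply Rabs_mult_le; [apply Rabs_nonneg_le; lra|exact PB]|eapply Rabs_mult_le; [exact KB|exact LB]]|].
  replace (Kvm * (CL1 * layer t / eps)) with (Kvm * CL1 * (layer t / eps)) by (field; lra). nra.
Qed.

Lemma g2_bound t : 0 <= t <= 1 -> Rabs (g2 t) <= K4 * eps + Kvm * CL2 * (layer t / eps ^ 2).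
Proof.
  intros Ht. pose proof (u0_derivatives_bound t Ht) as [_ [_ [_ PB]]]. pose proof (v_res2_bound t Ht) as LB.
  pose proof v_coef_bound as KB. destruct constants_nonneg as [Cp [Kp _]]. unfold g2.
  eapply Rle_trans; [eapply Rabs_minus_le; [eapply Rabs_mult_le; [apply Rabs_nonneg_le; lra|exact PB]|eapply Rabs_mult_le; [exact KB|exact LB]]|].
  assert (0 < eps ^ 2) by (apply pow_lt; lra).
  replace (Kvm * (CL2 * layer t / eps ^ 2)) with (Kvm * CL2 * (layer t / eps ^ 2)) by (field; lra). nra.
Qed.

Lemma A0_dominates : K2 + Kvm * CL0 / d + Cpsi + Kvm <= beta * A0 /\ Kvm * CL0 <= beta * A0 * d.
Proof.
  destruct constants_nonneg as [Cp [Kp [L0 _]]].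
  assert (E : beta * A0 = K2 + Kvm * CL0 / d + Cpsi + Kvm + beta) by (unfold A0; field; lra).
  assert (0 <= Kvm * CL0 / d) by (apply Rdiv_le_0_compat; nra).
  pose proof K_chain. split; [lra|].
  assert (E2 : Kvm * CL0 = Kvm * CL0 / d * d) by (field; lra).
  assert (Kvm * CL0 / d <= beta * A0) by lra. nra.
Qed.

Lemma y_barrier_dominates x : 0 < x < 1 ->
  Rabs (g x) < A0 * eps * b x + A0 * beta * layer x * (b x - beta)
    + c x * (A0 * eps * (2 - x) + A0 * eps * layer x).
Proof.
  intros Hx. destruct constants_nonneg as [Cp [Kp [L0 [_ [_ A0p]]]]]. destruct A0_dominates as [HA1 HA2].
  assert (0 <= Kvm * CL0 / d) by (apply Rdiv_le_0_compat; nra). pose proof K_chain.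
  pose proof (g_bound x ltac:(lra)).
  pose proof (Hbmin x ltac:(lra)). pose proof (Hcpos x ltac:(lra)). pose proof (layer_pos x).
  assert (0 <= c x * (A0 * eps * (2 - x) + A0 * eps * layer x)).
  { apply Rmult_le_pos; auto. assert (0 < A0 * eps) by nra. nra. }
  assert (A0 * eps * b x >= A0 * eps * beta + A0 * eps * d) by (assert (0 < A0 * eps) by nra; nra).
  assert (A0 * beta * layer x * (b x - beta) >= A0 * beta * d * layer x).
  { assert (0 < A0 * beta * layer x) by (apply Rmult_lt_0_compat; nra). nra. }
  assert (A0 * eps * beta >= K2 * eps) by (assert (0 <= (beta * A0 - K2) * eps) by (apply Rmult_le_pos; lra); nra).
  assert (A0 * beta * d * layer x >= Kvm * CL0 * layer x).
  { assert (0 <= (beta * A0 * d - Kvm * CL0) * layer x) by (apply Rmult_le_pos; lra). nra. }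
  assert (0 < A0 * eps * d) by (apply Rmult_lt_0_compat; nra).
  lra.
Qed.

Lemma y_bound : forall x, 0 <= x <= 1 -> Rabs (y x) <= 3 * A0 * eps.
Proof.
  destruct constants_nonneg as [Cp [Kp [L0 [_ [_ A0p]]]]]. destruct A0_dominates as [HA1 HA2].
  assert (0 <= Kvm * CL0 / d) by (apply Rdiv_le_0_compat; nra). pose proof K_chain.
  assert (B : forall x, 0 <= x <= 1 -> Rabs (y x) <= A0 * eps * (2 - x) + A0 * eps * layer x).
  { apply (barrier_bound eps b c y y1 y2 (fun x => A0 * eps * (2 - x) + A0 * eps * layer x)
      (fun x => - A0 * eps + A0 * eps * (- (beta / eps) * layer x))
      (fun x => A0 * eps * ((beta / eps) ^ 2 * layer x))); try lra.
    - intros x Hx; apply Hcpos; lra.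
    - intros x _. apply (is_derive_continuity_pt _ _ (y1 x)), is_derive_y.
    - intros x _. pose proof (is_derive_layer x).
      apply (is_derive_continuity_pt _ _ (- A0 * eps + A0 * eps * (- (beta / eps) * layer x))). auto_derive_hyps. ring.
    - intros x _. apply is_derive_y.
    - intros x _. apply is_derive_y1.
    - intros x _. pose proof (is_derive_layer x). auto_derive_hyps. ring.
    - intros x _. pose proof (is_derive_layer x). auto_derive_hyps. field. lra.
    - intros x Hx. cbv beta.
      replace (- eps * y2 x - b x * y1 x + c x * y x) with (g x) by (pose proof (ode_y x Hx); lra).
      replace (- eps * (A0 * eps * ((beta / eps) ^ 2 * layer x)) - b x * (- A0 * eps + A0 * eps * (- (beta / eps) * layer x))
        + c x * (A0 * eps * (2 - x) + A0 * eps * layer x)) with (A0 * eps * b x + A0 * beta * layer x * (b x - beta)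
        + c x * (A0 * eps * (2 - x) + A0 * eps * layer x)) by (field; lra).
      apply y_barrier_dominates; auto.
    - cbv beta. rewrite layer_0. eapply Rle_trans; [apply y_0_bound|].
      assert (Cpsi / beta <= A0).
      { apply (Rmult_le_reg_l beta); auto. replace (beta * (Cpsi / beta)) with Cpsi by (field; lra). lra. }
      replace (eps * Cpsi / beta) with (eps * (Cpsi / beta)) by (field; lra). nra.
    - cbv beta. eapply Rle_trans; [apply y_1_bound|]. pose proof (layer_pos 1).
      assert (Kvm / beta <= A0).
      { apply (Rmult_le_reg_l beta); auto. replace (beta * (Kvm / beta)) with Kvm by (field; lra). lra. }
      replace (Kvm * eps / beta) with (eps * (Kvm / beta)) by (field; lra).
      assert (0 < A0 * eps * layer 1) by (apply Rmult_lt_0_compat; nra). nra. }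
  intros x Hx. specialize (B x Hx). pose proof (layer_le_1 x ltac:(lra)). pose proof (layer_pos x).
  assert (A0 * eps * layer x <= A0 * eps) by (assert (0 < A0 * eps) by nra; nra).
  assert (0 <= A0 * eps * x) by (apply Rmult_le_pos; nra). lra.
Qed.

Lemma barrier_first_order_step zt dzt Rft bt A C1 C2 W s :
  eps * dzt = - bt * zt + Rft -> Rabs Rft <= C1 * eps + C2 * W ->
  C1 <= A * beta -> C2 <= A * d -> 0 < A -> beta + d <= bt -> 0 <= W -> s = 1 \/ s = -1 ->
  0 < s * zt - A * (eps + W) -> s * dzt - A * (- (beta / eps) * W) < 0.
Proof.
  intros Hz HR H1 H2 HA Hbt W0 Hs Hq. apply Rabs_le_between in HR.
  assert (E : eps * (s * dzt - A * (- (beta / eps) * W)) = s * (- bt * zt + Rft) + A * beta * W)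
    by (rewrite <- Hz; field; lra).
  apply (Rmult_lt_reg_l eps); [lra|]. rewrite E, Rmult_0_r.
  assert (Q : bt * (s * zt) >= bt * (A * (eps + W))) by (apply Rmult_ge_compat_l; lra).
  replace (s * (- bt * zt + Rft)) with (- (bt * (s * zt)) + s * Rft) by ring.
  assert (s * Rft <= C1 * eps + C2 * W) by (destruct Hs; subst s; lra).
  assert (bt * (A * (eps + W)) >= beta * A * eps + d * A * eps + beta * A * W + d * A * W).
  { assert (0 <= A * (eps + W)) by (apply Rmult_le_pos; lra).
    assert (bt * (A * (eps + W)) >= (beta + d) * (A * (eps + W))) by (apply Rmult_ge_compat_r; lra).
    lra. }
  assert (C1 * eps <= A * beta * eps) by (apply Rmult_le_compat_r; lra).
  assert (C2 * W <= A * d * W) by (apply Rmult_le_compat_r; lra).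
  assert (0 < d * A * eps) by (apply Rmult_lt_0_compat; [apply Rmult_lt_0_compat|]; lra).
  nra.
Qed.

Lemma barrier_first_order (z dz Rf : R -> R) (A C1 C2 : R) (k : nat) x0 x :
  0 <= x0 <= x -> x < 1 ->
  (forall t, x0 <= t <= x -> continuity_pt z t) ->
  (forall t, x0 < t <= x -> is_derive z t (dz t)) ->
  (forall t, x0 < t <= x -> eps * dz t = - b t * z t + Rf t) ->
  (forall t, x0 < t <= x -> Rabs (Rf t) <= C1 * eps + C2 * (layer t / eps ^ k)) ->
  C1 <= A * beta -> C2 <= A * d -> 0 < A ->
  Rabs (z x0) <= A * (eps + layer x0 / eps ^ k) ->
  Rabs (z x) <= A * (eps + layer x / eps ^ k).
Proof.
  intros Hx Hx1 Hc Hdz Hz HR H1 H2 HA H0.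
  assert (ek : 0 < eps ^ k) by (apply pow_lt; lra).
  assert (key : forall s, (s = 1 \/ s = -1) -> s * z x - A * (eps + layer x / eps ^ k) <= 0).
  { intros s Hs.
    apply (nonpos_propagates_right (fun t => s * z t - A * (eps + layer t / eps ^ k))
       (fun t => s * dz t - A * (- (beta / eps) * (layer t / eps ^ k))) x0 x); try lra.
    - intros t Ht. apply continuity_pt_minus.
      + apply continuity_pt_mult; [apply continuity_pt_const; intros ??; auto|apply Hc; auto].
      + apply (is_derive_continuity_pt _ _ (A * (- (beta / eps) * (layer t / eps ^ k)))). pose proof (is_derive_layer t). auto_derive_hyps. field. lra.
    - intros t Ht. pose proof (is_derive_layer t). specialize (Hdz t Ht). auto_derive_hyps. field. lra.
    - simpl. apply Rabs_le_between in H0. destruct Hs; subst s; lra.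
    - intros t Ht Hq. simpl in Hq.
      apply (barrier_first_order_step (z t) (dz t) (Rf t) (b t) A C1 C2 (layer t / eps ^ k) s); auto.
      + apply Hbmin; lra.
      + apply Rdiv_le_0_compat; [left; apply layer_pos|lra]. }
  pose proof (key 1 (or_introl eq_refl)). pose proof (key (-1) (or_intror eq_refl)).
  apply Rabs_le. lra.
Qed.

Definition A1 := (3 * M * A0 + K2) / beta + Kvm * CL0 / d + K1 + 1.

Lemma y1_bound : forall x, 0 <= x < 1 -> Rabs (y1 x) <= A1 * (eps + layer x).
Proof.
  destruct constants_nonneg as [Cp [Kp [L0 [_ [_ A0p]]]]]. assert (KF := K_chain).
  assert (A1p : 1 <= A1).
  { unfold A1. assert (0 <= (3 * M * A0 + K2) / beta) by (apply Rdiv_le_0_compat; nra).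
    assert (0 <= Kvm * CL0 / d) by (apply Rdiv_le_0_compat; nra). lra. }
  intros x Hx.
  replace (layer x) with (layer x / eps ^ 0) by (simpl; field).
  apply (barrier_first_order y1 y2 (fun t => c t * y t - g t) A1 (3 * M * A0 + K2) (Kvm * CL0) 0 0 x); try lra.
  - intros t Ht. apply (is_derive_continuity_pt _ _ (y2 t)). apply is_derive_y1.
  - intros t Ht. apply is_derive_y1.
  - intros t Ht. rewrite ode_y by lra. ring.
  - intros t Ht. simpl. replace (layer t / 1) with (layer t) by field.
    eapply Rle_trans; [apply Rabs_minus_le; [apply Rabs_mult_le; [apply Bc; lra|apply y_bound; lra]|apply g_bound; lra]|].
    lra.
  - unfold A1. replace (((3 * M * A0 + K2) / beta + Kvm * CL0 / d + K1 + 1) * beta) with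
      (3 * M * A0 + K2 + (Kvm * CL0 / d + K1 + 1) * beta) by (field; lra).
    assert (0 <= Kvm * CL0 / d) by (apply Rdiv_le_0_compat; nra).
    assert (0 <= (Kvm * CL0 / d + K1 + 1) * beta) by (apply Rmult_le_pos; lra). lra.
  - unfold A1. replace (((3 * M * A0 + K2) / beta + Kvm * CL0 / d + K1 + 1) * d) with
      (Kvm * CL0 + ((3 * M * A0 + K2) / beta + K1 + 1) * d) by (field; lra).
    assert (0 <= (3 * M * A0 + K2) / beta) by (apply Rdiv_le_0_compat; nra).
    assert (0 <= ((3 * M * A0 + K2) / beta + K1 + 1) * d) by (apply Rmult_le_pos; lra). lra.
  - assert (E : y1 0 = - Derive u0 0).
    { unfold y1, v_coef, layer0. replace (- b 0 * 0 / eps) with 0 by (field; lra). rewrite exp_0.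
      pose proof (b_pos 0 ltac:(lra)). field. lra. }
    rewrite E, Rabs_Ropp, Derive_u0_0. pose proof (u0_derivatives_bound 0 ltac:(lra)) as [PB _].
    unfold layer. replace (- beta * 0 / eps) with 0 by (field; lra). rewrite exp_0. simpl.
    replace (eps + 1 / 1) with (eps + 1) by field.
    assert (K1 <= A1).
    { unfold A1. assert (0 <= (3 * M * A0 + K2) / beta) by (apply Rdiv_le_0_compat; nra).
      assert (0 <= Kvm * CL0 / d) by (apply Rdiv_le_0_compat; nra). lra. }
    nra.
Qed.

Lemma layer_ge_half t : 0 <= t <= eps / (2 * beta) -> 1 / 2 <= layer t.
Proof.
  intros Ht.
  assert (H12 : exp (1 / 2) < 2).
  { assert (exp (1/2) * exp (1/2) = exp 1) by (rewrite <- exp_plus; f_equal; field).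
    pose proof exp_le_3. pose proof (exp_pos (1/2)). nra. }
  assert (exp (- (1 / 2)) > 1 / 2).
  { rewrite exp_Ropp. pose proof (exp_pos (1/2)).
    apply (Rmult_lt_reg_l (exp (1/2))); auto. rewrite Rinv_r by lra. lra. }
  unfold layer. assert (- (1 / 2) <= - beta * t / eps).
  { assert (beta * t / eps <= 1 / 2).
    { apply (Rmult_le_reg_l (2 * beta / eps)). apply Rdiv_lt_0_compat; lra.
      replace (2 * beta / eps * (beta * t / eps)) with (beta * (2 * beta / eps * t / eps)) by (field; lra).
      assert (2 * beta / eps * t <= 1).
      { apply (Rmult_le_reg_l (eps / (2 * beta))). apply Rdiv_lt_0_compat; lra.
        replace (eps / (2 * beta) * (2 * beta / eps * t)) with t by (field; lra). lra. }
      assert (0 <= 2 * beta / eps * t) by (apply Rmult_le_pos; [apply Rdiv_le_0_compat|]; lra).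
      assert (2 * beta / eps * t / eps <= 1 / eps) by (apply Rmult_le_compat_r; [left; apply Rinv_0_lt_compat|]; lra).
      replace (2 * beta / eps * (1 / 2)) with (beta * (1 / eps)) by (field; lra).
      apply Rmult_le_compat_l; lra. }
    replace (- beta * t / eps) with (- (beta * t / eps)) by (field; lra). lra. }
  destruct (Req_dec (- (1/2)) (- beta * t / eps)) as [E|E]; [rewrite <- E; lra|].
  assert (exp (- (1/2)) < exp (- beta * t / eps)) by (apply exp_increasing; lra). lra.
Qed.

Lemma barrier_first_order_01 (z dz Rf : R -> R) (A C1 C2 Cp : R) (k : nat) :
  (forall t, 0 < t < 1 -> is_derive z t (dz t)) ->
  (forall t, 0 < t < 1 -> eps * dz t = - b t * z t + Rf t) ->
  (forall t, 0 < t < 1 -> Rabs (Rf t) <= C1 * eps + C2 * (layer t / eps ^ k)) ->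
  (forall t, 0 < t < 1 -> Rabs (z t) <= Cp / eps ^ k) ->
  C1 <= A * beta -> C2 <= A * d -> 0 < A -> 2 * Cp <= A ->
  forall x, 0 < x < 1 -> Rabs (z x) <= A * (eps + layer x / eps ^ k).
Proof.
  intros Hdz Hz HR Hp H1 H2 HA HC x Hx.
  assert (ek : 0 < eps ^ k) by (apply pow_lt; lra).
  assert (thr : forall t, 0 < t < 1 -> t <= eps / (2 * beta) -> Rabs (z t) <= A * (eps + layer t / eps ^ k)).
  { intros t Ht Ht2. pose proof (layer_ge_half t ltac:(lra)). specialize (Hp t Ht).
    assert (Cp / eps ^ k <= A * (layer t / eps ^ k)).
    { unfold Rdiv. rewrite <- Rmult_assoc. apply Rmult_le_compat_r; [left; apply Rinv_0_lt_compat; lra|].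
      assert (0 <= Cp) by (pose proof (Rabs_pos (z t)); assert (0 <= Cp / eps ^ k) by lra;
        apply Rmult_le_reg_r with (/ eps ^ k); [apply Rinv_0_lt_compat; lra|]; lra).
      nra. }
    assert (0 <= A * eps) by nra. nra. }
  destruct (Rle_dec x (eps / (2 * beta))) as [Hle|Hgt]; [apply thr; auto|].
  assert (t0p : 0 < eps / (2 * beta)) by (apply Rdiv_lt_0_compat; lra).
  apply (barrier_first_order z dz Rf A C1 C2 k (eps / (2 * beta)) x); try lra.
  - intros t Ht. apply (is_derive_continuity_pt _ _ (dz t)). apply Hdz. lra.
  - intros t Ht. apply Hdz. lra.
  - intros t Ht. apply Hz. lra.
  - intros t Ht. apply HR. lra.
  - apply thr; lra.
Qed.

Lemma layer_scaling x : 0 <= x -> layer x <= layer x / eps /\ layer x / eps <= layer x / eps ^ 2 /\ layer x / eps ^ 2 <= layer x / eps ^ 3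
  /\ layer x <= 1 /\ 0 < layer x.
Proof.
  intros Hx. pose proof (layer_pos x). pose proof (layer_le_1 x Hx).
  assert (ie : 1 <= / eps) by (rewrite <- Rinv_1; apply Rinv_le_contravar; lra).
  assert (A : forall y, 0 < y -> y <= y / eps) by (intros y Hy; unfold Rdiv; nra).
  assert (E2 : layer x / eps ^ 2 = layer x / eps / eps) by (field; lra).
  assert (E3 : layer x / eps ^ 3 = layer x / eps ^ 2 / eps) by (field; lra).
  assert (0 < layer x / eps) by (apply Rdiv_lt_0_compat; lra).
  assert (0 < layer x / eps ^ 2) by (apply Rdiv_lt_0_compat; [lra|apply pow_lt; lra]).
  repeat split; try lra.
  - apply A; lra.
  - rewrite E2. apply A; lra.
  - rewrite E3. apply A; lra.
Qed.

Definition Cp2 := 2 * M * A1 + 3 * M * A0 + K2 + Kvm * CL0.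
Definition A2 := 2 * Cp2 + (2 * M * A1 + 3 * M * A0 + K3) / beta + (2 * M * A1 + Kvm * CL1) / d + 1.

Lemma constants_nonneg2 : 1 <= A1 /\ 0 <= Cp2 /\ 1 <= A2.
Proof.
  destruct constants_nonneg as [Cp [Kp [L0 [L1 [_ A0p]]]]]. assert (KF := K_chain).
  assert (A1p : 1 <= A1).
  { unfold A1. assert (0 <= (3 * M * A0 + K2) / beta) by (apply Rdiv_le_0_compat; nra).
    assert (0 <= Kvm * CL0 / d) by (apply Rdiv_le_0_compat; nra). lra. }
  assert (0 <= Cp2) by (unfold Cp2; nra).
  assert (1 <= A2).
  { unfold A2. assert (0 <= (2 * M * A1 + 3 * M * A0 + K3) / beta) by (apply Rdiv_le_0_compat; nra).
    assert (0 <= (2 * M * A1 + Kvm * CL1) / d) by (apply Rdiv_le_0_compat; nra). lra. }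
  tauto.
Qed.

Lemma y2_crude_bound t : 0 < t < 1 -> Rabs (y2 t) <= Cp2 / eps.
Proof.
  intros Ht. destruct constants_nonneg as [Cp [Kp [L0 [L1 [_ A0p]]]]]. assert (KF := K_chain).
  destruct constants_nonneg2 as [A1p [Cp2p A2p]].
  pose proof (ode_y t Ht) as Y. pose proof (layer_scaling t ltac:(lra)) as [_ [_ [_ [X1 X0]]]].
  assert (E : y2 t = (- b t * y1 t + c t * y t - g t) / eps) by (rewrite <- Y; field; lra).
  rewrite E. apply Rabs_div_lower_le; [lra|lra|].
  pose proof (Bb t ltac:(lra)). pose proof (Bc t ltac:(lra)). pose proof (y1_bound t ltac:(lra)).
  pose proof (y_bound t ltac:(lra)). pose proof (g_bound t ltac:(lra)).
  assert (Rabs (- b t) <= M) by (rewrite Rabs_Ropp; auto).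
  eapply Rle_trans; [bound_terms|]. unfold Cp2.
  assert (M * (A1 * (eps + layer t)) <= 2 * M * A1) by (assert (0 <= M * A1) by nra; nra).
  assert (M * (3 * A0 * eps) <= 3 * M * A0) by (assert (0 <= M * A0) by nra; nra).
  assert (K2 * eps + Kvm * CL0 * layer t <= K2 + Kvm * CL0) by (assert (0 <= Kvm * CL0) by nra; nra).
  lra.
Qed.

Lemma y2_bound : forall x, 0 < x < 1 -> Rabs (y2 x) <= A2 * (eps + layer x / eps ^ 1).
Proof.
  destruct constants_nonneg as [Cp [Kp [L0 [L1 [_ A0p]]]]]. assert (KF := K_chain).
  destruct constants_nonneg2 as [A1p [Cp2p A2p]].
  destruct (dominating_sum_bounds (2 * Cp2) (2 * M * A1 + 3 * M * A0 + K3) (2 * M * A1 + Kvm * CL1) beta d)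
    as [D1 [D2 D3]]; [lra|lra|lra|nra|nra|]. fold A2 in D1, D2, D3.
  apply (barrier_first_order_01 y2 y3 (fun t => - b1 t * y1 t + c1 t * y t + c t * y1 t - g1 t) A2
    (2 * M * A1 + 3 * M * A0 + K3) (2 * M * A1 + Kvm * CL1) Cp2 1); try lra.
  - intros t Ht. apply is_derive_y2; auto.
  - intros t Ht. unfold y3. field. lra.
  - intros t Ht. pose proof (layer_scaling t ltac:(lra)) as [X01 [_ [_ [X1 X0]]]].
    pose proof (Bb1 t ltac:(lra)). pose proof (Bc1 t ltac:(lra)). pose proof (Bc t ltac:(lra)).
    pose proof (y1_bound t ltac:(lra)). pose proof (y_bound t ltac:(lra)).
    pose proof (g1_bound t ltac:(lra)).
    assert (Rabs (- b1 t) <= M) by (rewrite Rabs_Ropp; auto).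
    eapply Rle_trans; [bound_terms|]. rewrite pow_1.
    assert (M * (A1 * (eps + layer t)) <= M * A1 * eps + M * A1 * (layer t / eps)) by (assert (0 <= M * A1) by nra; nra).
    assert (M * (3 * A0 * eps) = 3 * M * A0 * eps) by ring.
    lra.
  - intros t Ht. rewrite pow_1. apply y2_crude_bound; auto.

Qed.

Definition Cp3 := 4 * M * A1 + 3 * M * A0 + M * Cp2 + K3 + Kvm * CL1.
Definition A3 := 2 * Cp3 + (3 * M * A1 + 3 * M * A2 + 3 * M * A0 + K4) / beta
   + (3 * M * A1 + 3 * M * A2 + Kvm * CL2) / d + 1.
Definition A4 := 3 * M * A1 + 3 * M * A2 + 3 * M * A0 + K4 + Kvm * CL2 + M * A3.

Lemma constants_nonneg3 : 0 <= Cp3 /\ 1 <= A3 /\ 0 <= A4.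
Proof.
  destruct constants_nonneg as [Cp [Kp [L0 [L1 [L2 A0p]]]]]. assert (KF := K_chain).
  destruct constants_nonneg2 as [A1p [Cp2p A2p]].
  assert (0 <= Cp3) by (unfold Cp3; nra).
  assert (1 <= A3).
  { unfold A3. assert (0 <= (3 * M * A1 + 3 * M * A2 + 3 * M * A0 + K4) / beta) by (apply Rdiv_le_0_compat; nra).
    assert (0 <= (3 * M * A1 + 3 * M * A2 + Kvm * CL2) / d) by (apply Rdiv_le_0_compat; nra). lra. }
  assert (0 <= A4) by (unfold A4; nra).
  tauto.
Qed.

Lemma y3_crude_bound t : 0 < t < 1 -> Rabs (y3 t) <= Cp3 / eps ^ 2.
Proof.
  intros Ht. destruct constants_nonneg as [Cp [Kp [L0 [L1 [_ A0p]]]]]. assert (KF := K_chain).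
  destruct constants_nonneg2 as [A1p [Cp2p A2p]].
  pose proof (layer_scaling t ltac:(lra)) as [X01 [_ [_ [X1 X0]]]].
  replace (Cp3 / eps ^ 2) with (Cp3 / eps / eps) by (field; lra).
  unfold y3. apply Rabs_div_lower_le; [lra|lra|].
  pose proof (Bb t ltac:(lra)). pose proof (Bc t ltac:(lra)). pose proof (Bb1 t ltac:(lra)). pose proof (Bc1 t ltac:(lra)).
  pose proof (y1_bound t ltac:(lra)). pose proof (y2_crude_bound t Ht). pose proof (y_bound t ltac:(lra)). pose proof (g1_bound t ltac:(lra)).
  assert (Rabs (- b1 t) <= M) by (rewrite Rabs_Ropp; auto).
  eapply Rle_trans; [bound_terms|]. unfold Cp3.
  assert (ie : 1 <= / eps) by (rewrite <- Rinv_1; apply Rinv_le_contravar; lra).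
  assert (Hd1 : forall q, 0 <= q -> q <= q / eps) by (intros q Hq; unfold Rdiv; nra).
  assert (M * (A1 * (eps + layer t)) <= 2 * M * A1) by (assert (0 <= M * A1) by nra; nra).
  assert (M * (3 * A0 * eps) <= 3 * M * A0) by (assert (0 <= M * A0) by nra; nra).
  assert (K3 * eps + Kvm * CL1 * (layer t / eps) <= (K3 + Kvm * CL1) / eps).
  { replace ((K3 + Kvm * CL1) / eps) with (K3 / eps + Kvm * CL1 * (1 / eps)) by (field; lra).
    assert (K3 * eps <= K3 / eps) by (pose proof (Hd1 K3 ltac:(lra)); nra).
    assert (layer t / eps <= 1 / eps) by (apply Rmult_le_compat_r; [left; apply Rinv_0_lt_compat|]; lra).
    assert (0 <= Kvm * CL1) by nra. nra. }
  assert (M * (Cp2 / eps) = (M * Cp2) / eps) by (field; lra).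
  pose proof (Hd1 (2 * M * A1) ltac:(nra)). pose proof (Hd1 (3 * M * A0) ltac:(nra)).
  replace ((4 * M * A1 + 3 * M * A0 + M * Cp2 + K3 + Kvm * CL1) / eps) with
    ((2 * M * A1) / eps + (3 * M * A0) / eps + (M * Cp2) / eps + (K3 + Kvm * CL1) / eps + (2 * M * A1) / eps) by (field; lra).
  lra.
Qed.

Lemma y3_bound : forall x, 0 < x < 1 -> Rabs (y3 x) <= A3 * (eps + layer x / eps ^ 2).
Proof.
  destruct constants_nonneg as [Cp [Kp [L0 [L1 [L2 A0p]]]]]. assert (KF := K_chain).
  destruct constants_nonneg2 as [A1p [Cp2p A2p]]. destruct constants_nonneg3 as [Cp3p [A3p _]].
  destruct (dominating_sum_bounds (2 * Cp3) (3 * M * A1 + 3 * M * A2 + 3 * M * A0 + K4)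
    (3 * M * A1 + 3 * M * A2 + Kvm * CL2) beta d) as [D1 [D2 D3]]; [lra|lra|lra|nra|nra|]. fold A3 in D1, D2, D3.
  apply (barrier_first_order_01 y3 y4 (fun t => - b2 t * y1 t - 2 * b1 t * y2 t + c2 t * y t + 2 * c1 t * y1 t + c t * y2 t - g2 t) A3
    (3 * M * A1 + 3 * M * A2 + 3 * M * A0 + K4) (3 * M * A1 + 3 * M * A2 + Kvm * CL2) Cp3 2); try lra.
  - intros t Ht. apply is_derive_y3; auto.
  - intros t Ht. unfold y4. field. lra.
  - intros t Ht. pose proof (layer_scaling t ltac:(lra)) as [X01 [X12 [_ [X1 X0]]]].
    pose proof (Bb2 t ltac:(lra)). pose proof (Bb1 t ltac:(lra)). pose proof (Bc2 t ltac:(lra)).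
    pose proof (Bc1 t ltac:(lra)). pose proof (Bc t ltac:(lra)).
    pose proof (y1_bound t ltac:(lra)). pose proof (y2_bound t Ht). pose proof (y_bound t ltac:(lra)). pose proof (g2_bound t ltac:(lra)).
    rewrite pow_1 in H5.
    assert (Rabs (- b2 t) <= M) by (rewrite Rabs_Ropp; auto).
    eapply Rle_trans; [bound_terms|].
    assert (M * (A1 * (eps + layer t)) <= M * A1 * eps + M * A1 * (layer t / eps ^ 2)) by (assert (0 <= M * A1) by nra; nra).
    assert (2 * M * (A2 * (eps + layer t / eps)) <= 2 * M * A2 * eps + 2 * M * A2 * (layer t / eps ^ 2)) by (assert (0 <= M * A2) by nra; nra).
    assert (M * (A2 * (eps + layer t / eps)) <= M * A2 * eps + M * A2 * (layer t / eps ^ 2)) by (assert (0 <= M * A2) by nra; nra).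
    assert (2 * M * (A1 * (eps + layer t)) <= 2 * M * A1 * eps + 2 * M * A1 * (layer t / eps ^ 2)) by (assert (0 <= M * A1) by nra; nra).
    assert (M * (3 * A0 * eps) = 3 * M * A0 * eps) by ring.
    lra.
  - intros t Ht. apply y3_crude_bound; auto.

Qed.

Lemma y4_bound x : 0 < x < 1 -> Rabs (y4 x) <= A4 * (1 + layer x / eps ^ 3).
Proof.
  intros Ht. destruct constants_nonneg as [Cp [Kp [L0 [L1 [L2 A0p]]]]]. assert (KF := K_chain).
  destruct constants_nonneg2 as [A1p [Cp2p A2p]]. destruct constants_nonneg3 as [Cp3p [A3p _]].
  pose proof (layer_scaling x ltac:(lra)) as [X01 [X12 [_ [X1 X0]]]].
  replace (A4 * (1 + layer x / eps ^ 3)) with (A4 * (eps + layer x / eps ^ 2) / eps) by (field; lra).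
  unfold y4. apply Rabs_div_lower_le; [lra|lra|].
  pose proof (Bb2 x ltac:(lra)). pose proof (Bb1 x ltac:(lra)). pose proof (Bc2 x ltac:(lra)).
  pose proof (Bc1 x ltac:(lra)). pose proof (Bc x ltac:(lra)). pose proof (Bb x ltac:(lra)).
  pose proof (y1_bound x ltac:(lra)). pose proof (y2_bound x Ht). pose proof (y_bound x ltac:(lra)). pose proof (g2_bound x ltac:(lra)).
  pose proof (y3_bound x Ht).
  rewrite pow_1 in H6.
  assert (Rabs (- b2 x) <= M) by (rewrite Rabs_Ropp; auto).
  eapply Rle_trans; [bound_terms|]. unfold A4.
  assert (M * (A1 * (eps + layer x)) <= M * A1 * eps + M * A1 * (layer x / eps ^ 2)) by (assert (0 <= M * A1) by nra; nra).
  assert (2 * M * (A2 * (eps + layer x / eps)) <= 2 * M * A2 * eps + 2 * M * A2 * (layer x / eps ^ 2)) by (assert (0 <= M * A2) by nra; nra).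
  assert (M * (A2 * (eps + layer x / eps)) <= M * A2 * eps + M * A2 * (layer x / eps ^ 2)) by (assert (0 <= M * A2) by nra; nra).
  assert (2 * M * (A1 * (eps + layer x)) <= 2 * M * A1 * eps + 2 * M * A1 * (layer x / eps ^ 2)) by (assert (0 <= M * A1) by nra; nra).
  assert (M * (A3 * (eps + layer x / eps ^ 2)) = M * A3 * eps + M * A3 * (layer x / eps ^ 2)) by ring.
  assert (M * (3 * A0 * eps) = 3 * M * A0 * eps) by ring.
  assert (0 < layer x / eps ^ 2) by lra.
  assert (0 <= M * A0 * (layer x / eps ^ 2)) by (apply Rmult_le_pos; [apply Rmult_le_pos|]; lra).
  assert (0 <= K4 * (layer x / eps ^ 2)) by (apply Rmult_le_pos; lra).
  assert (0 <= Kvm * CL2 * eps) by (apply Rmult_le_pos; [apply Rmult_le_pos|]; lra).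
  lra.
Qed.

Lemma y_higher_derivatives_bound t : 0 < t < 1 ->
  Rabs (y2 t) <= 2 * A2 / eps /\ Rabs (y3 t) <= 2 * A3 / eps ^ 2 /\ Rabs (y4 t) <= 2 * A4 / eps ^ 3.
Proof.
  intros Ht. pose proof (layer_scaling t ltac:(lra)) as [X01 [X12 [X23 [X1 X0]]]].
  destruct constants_nonneg2 as [A1p [Cp2p A2p]]. destruct constants_nonneg3 as [Cp3p [A3p A4p]].
  pose proof (y2_bound t Ht) as B2. pose proof (y3_bound t Ht) as B3. pose proof (y4_bound t Ht) as B4.
  rewrite pow_1 in B2.
  assert (ie : 1 <= / eps) by (rewrite <- Rinv_1; apply Rinv_le_contravar; lra).
  assert (e2 : 0 < eps ^ 2) by (apply pow_lt; lra). assert (e3 : 0 < eps ^ 3) by (apply pow_lt; lra).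
  assert (eps <= 1 / eps) by (unfold Rdiv; nra).
  assert (eps <= 1 / eps ^ 2).
  { apply (Rmult_le_reg_l (eps ^ 2)); auto. replace (eps ^ 2 * (1 / eps ^ 2)) with 1 by (field; lra). simpl. nra. }
  assert (1 <= 1 / eps ^ 3).
  { apply (Rmult_le_reg_l (eps ^ 3)); auto. replace (eps ^ 3 * (1 / eps ^ 3)) with 1 by (field; lra).
    simpl. assert (eps * eps <= 1) by nra. nra. }
  assert (layer t / eps <= 1 / eps) by (apply Rmult_le_compat_r; [left; apply Rinv_0_lt_compat|]; lra).
  assert (layer t / eps ^ 2 <= 1 / eps ^ 2) by (apply Rmult_le_compat_r; [left; apply Rinv_0_lt_compat|]; lra).
  assert (layer t / eps ^ 3 <= 1 / eps ^ 3) by (apply Rmult_le_compat_r; [left; apply Rinv_0_lt_compat|]; lra).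
  repeat split.
  - replace (2 * A2 / eps) with (A2 * (1 / eps + 1 / eps)) by (field; lra). nra.
  - replace (2 * A3 / eps ^ 2) with (A3 * (1 / eps ^ 2 + 1 / eps ^ 2)) by (field; lra). nra.
  - replace (2 * A4 / eps ^ 3) with (A4 * (1 / eps ^ 3 + 1 / eps ^ 3)) by (field; lra). nra.
Qed.

Lemma y_higher_derivatives_bound_beyond t : 0 < t < 1 -> layer t <= eps ^ 3 ->
  Rabs (y2 t) <= 2 * A2 * eps /\ Rabs (y3 t) <= 2 * A3 * eps /\ Rabs (y4 t) <= 2 * A4.
Proof.
  intros Ht Hex. destruct constants_nonneg2 as [A1p [Cp2p A2p]]. destruct constants_nonneg3 as [Cp3p [A3p A4p]].
  pose proof (y2_bound t Ht) as B2. pose proof (y3_bound t Ht) as B3. pose proof (y4_bound t Ht) as B4.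
  rewrite pow_1 in B2.
  assert (layer t / eps <= eps) by (apply (Rmult_le_reg_l eps); [lra|]; replace (eps * (layer t / eps)) with (layer t) by (field; lra); simpl in Hex; nra).
  assert (layer t / eps ^ 2 <= eps) by (apply (Rmult_le_reg_l (eps ^ 2)); [apply pow_lt; lra|]; replace (eps ^ 2 * (layer t / eps ^ 2)) with (layer t) by (field; lra); simpl in *; nra).
  assert (layer t / eps ^ 3 <= 1) by (apply (Rmult_le_reg_l (eps ^ 3)); [apply pow_lt; lra|]; replace (eps ^ 3 * (layer t / eps ^ 3)) with (layer t) by (field; lra); lra).
  repeat split; nra.
Qed.

Definition Cy := 2 * M * M * A2 + A4 / 6 + M * A3 / 3 + 2 * A3.

Lemma Cy_pos : 0 <= Cy.
Proof.
  destruct constants_nonneg2 as [A1p [Cp2p A2p]]. destruct constants_nonneg3 as [Cp3p [A3p A4p]].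
  unfold Cy. assert (0 <= M * M * A2) by (apply Rmult_le_pos; nra).
  assert (0 <= M * A3) by nra. lra.
Qed.

Lemma y_derivatives : (forall t, Derive y t = y1 t) /\ (forall t, Derive y1 t = y2 t) /\ (forall t, continuity_pt y t).
Proof.
  split; [|split]; intros t.
  - apply is_derive_unique, is_derive_y.
  - apply is_derive_unique, is_derive_y1.
  - apply (is_derive_continuity_pt _ _ (y1 t)), is_derive_y.
Qed.

Lemma sigma_facts x hr : 0 <= x <= 1 -> 0 < hr ->
  let rho := b x * hr / (2 * eps) in
  0 < Defs.sigma rho <= 1 /\ Rabs (1 - Defs.sigma rho - rho) <= 4 * rho ^ 2 /\ eps * rho = b x * hr / 2 /\ 0 < rho
  /\ 4 * rho ^ 2 <= M * M * hr ^ 2 / eps ^ 2 /\ 0 < b x <= M.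
Proof.
  intros Hx Hr rho. pose proof (b_pos x Hx). pose proof (Bb x Hx) as BB. rewrite Rabs_pos_eq in BB by lra.
  assert (0 < rho) by (unfold rho; apply Rdiv_lt_0_compat; [apply Rmult_lt_0_compat|]; lra).
  split; [apply sigma_bounds; auto|]. split; [apply sigma_expansion; auto|]. split; [unfold rho; field; lra|].
  split; auto. split; [|lra].
  unfold rho. replace (4 * (b x * hr / (2 * eps)) ^ 2) with (b x * b x * hr ^ 2 / eps ^ 2) by (field; lra).
  apply Rmult_le_compat_r. left; apply Rinv_0_lt_compat, pow_lt; lra.
  apply Rmult_le_compat_r; [apply pow2_ge_0|]. nra.
Qed.

Lemma local_tau_fine x h : 0 < h -> 0 <= x - h -> x + h <= 1 ->
  Rabs (local_tau eps (Defs.sigma (b x * h / (2 * eps))) (b x) y y1 y2 x h h) <= Cy * (h / eps) ^ 2.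
Proof.
  intros Hh H1 H2. destruct y_derivatives as [F1 [F2 F3]].
  destruct (sigma_facts x h ltac:(lra) Hh) as [S1 [S2 [S3 [S4 [S5 S6]]]]].
  destruct constants_nonneg2 as [A1p [Cp2p A2p]]. destruct constants_nonneg3 as [Cp3p [A3p A4p]].
  assert (e2 : 0 < eps ^ 2) by (apply pow_lt; lra). assert (e3 : 0 < eps ^ 3) by (apply pow_lt; lra).
  eapply Rle_trans.
  { apply (local_tau_uniform eps (Defs.sigma (b x * h / (2 * eps))) (b x) y y1 y2 y3 y4 x h h ltac:(lra) ltac:(lra) ltac:(lra) Hh Hh
      ltac:(intros; apply is_derive_y) ltac:(intros; apply is_derive_y1) (F3 _) (F3 _) (2 * A3 / eps ^ 2) (2 * A4 / eps ^ 3) (b x * h / (2 * eps))); auto.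
    - intros z Hz. apply is_derive_y2. lra.
    - intros z Hz. apply is_derive_y3. lra.
    - intros z Hz. apply (y_higher_derivatives_bound z ltac:(lra)).
    - intros z Hz. apply (y_higher_derivatives_bound z ltac:(lra)). }
  pose proof (y_higher_derivatives_bound x ltac:(lra)) as [R2 _].
  set (rho := b x * h / (2 * eps)) in *.
  assert (T1 : eps * (4 * rho ^ 2) * Rabs (y2 x) <= 2 * M * M * A2 * (h / eps) ^ 2).
  { apply Rle_trans with (eps * (M * M * h ^ 2 / eps ^ 2) * (2 * A2 / eps)).
    - apply Rmult_le_compat; [apply Rmult_le_pos; [lra|apply Rmult_le_pos; [lra|apply pow2_ge_0]]|apply Rabs_pos| |auto].
      apply Rmult_le_compat_l; lra.
    - right. field. lra. }
  assert (T2 : eps * Defs.sigma rho * (2 * A4 / eps ^ 3 * h ^ 2 / 12) <= A4 / 6 * (h / eps) ^ 2).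
  { assert (0 <= 2 * A4 / eps ^ 3 * h ^ 2 / 12) by (apply Rdiv_le_0_compat; [apply Rmult_le_pos; [apply Rdiv_le_0_compat|apply pow2_ge_0]|]; lra).
    apply Rle_trans with (eps * 1 * (2 * A4 / eps ^ 3 * h ^ 2 / 12)).
    - apply Rmult_le_compat_r; auto. apply Rmult_le_compat_l; lra.
    - right. field. lra. }
  assert (T3 : b x * (2 * A3 / eps ^ 2 * h ^ 2 / 6) <= M * A3 / 3 * (h / eps) ^ 2).
  { assert (0 <= 2 * A3 / eps ^ 2 * h ^ 2 / 6) by (apply Rdiv_le_0_compat; [apply Rmult_le_pos; [apply Rdiv_le_0_compat|apply pow2_ge_0]|]; lra).
    apply Rle_trans with (M * (2 * A3 / eps ^ 2 * h ^ 2 / 6)).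
    - apply Rmult_le_compat_r; lra.
    - right. field. lra. }
  unfold Cy. assert (0 <= 2 * A3 * (h / eps) ^ 2) by (apply Rmult_le_pos; [lra|apply pow2_ge_0]).
  lra.
Qed.

Lemma local_tau_transition x hl hr : 0 < hl -> 0 < hr -> 0 <= x - hl -> x + hr <= 1 ->
  (forall z, x - hl < z < x + hr -> layer z <= eps ^ 3) ->
  Rabs (local_tau eps (Defs.sigma (b x * hr / (2 * eps))) (b x) y y1 y2 x hl hr) <= Cy * hr ^ 2 + 2 * A3 / 3 * eps ^ 2 * (hl + hr).
Proof.
  intros Hl Hr H1 H2 Hex. destruct y_derivatives as [F1 [F2 F3]].
  destruct (sigma_facts x hr ltac:(lra) Hr) as [S1 [S2 [S3 [S4 [S5 S6]]]]].
  destruct constants_nonneg2 as [A1p [Cp2p A2p]]. destruct constants_nonneg3 as [Cp3p [A3p A4p]].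
  assert (e2 : 0 < eps ^ 2) by (apply pow_lt; lra).
  eapply Rle_trans.
  { apply (local_tau_nonuniform eps (Defs.sigma (b x * hr / (2 * eps))) (b x) y y1 y2 y3 x hl hr ltac:(lra) ltac:(lra) ltac:(lra) Hl Hr
      ltac:(intros; apply is_derive_y) ltac:(intros; apply is_derive_y1) (F3 _) (F3 _) (2 * A3 * eps) (b x * hr / (2 * eps))); auto.
    - intros z Hz. apply is_derive_y2. lra.
    - intros z Hz. apply (y_higher_derivatives_bound_beyond z ltac:(lra) (Hex z Hz)). }
  pose proof (y_higher_derivatives_bound_beyond x ltac:(lra) (Hex x ltac:(lra))) as [R2 _].
  set (rho := b x * hr / (2 * eps)) in *.
  assert (T1 : eps * (4 * rho ^ 2) * Rabs (y2 x) <= 2 * M * M * A2 * hr ^ 2).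
  { apply Rle_trans with (eps * (M * M * hr ^ 2 / eps ^ 2) * (2 * A2 * eps)).
    - apply Rmult_le_compat; [apply Rmult_le_pos; [lra|apply Rmult_le_pos; [lra|apply pow2_ge_0]]|apply Rabs_pos| |auto].
      apply Rmult_le_compat_l; lra.
    - right. field. lra. }
  assert (T2 : eps * Defs.sigma rho * (2 * A3 * eps / 3 * (hl + hr)) <= 2 * A3 / 3 * eps ^ 2 * (hl + hr)).
  { assert (0 <= 2 * A3 * eps / 3 * (hl + hr)) by (apply Rmult_le_pos; [apply Rdiv_le_0_compat; [apply Rmult_le_pos|]|]; lra).
    apply Rle_trans with (eps * 1 * (2 * A3 * eps / 3 * (hl + hr))).
    - apply Rmult_le_compat_r; auto. apply Rmult_le_compat_l; lra.
    - right. field. }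
  assert (T3 : b x * (2 * A3 * eps * hr ^ 2 / 6) <= M * A3 / 3 * hr ^ 2).
  { assert (0 <= 2 * A3 * eps * hr ^ 2 / 6) by (apply Rdiv_le_0_compat; [apply Rmult_le_pos; [apply Rmult_le_pos|apply pow2_ge_0]|]; lra).
    apply Rle_trans with (M * (2 * A3 * eps * hr ^ 2 / 6)).
    - apply Rmult_le_compat_r; lra.
    - assert (0 <= M * A3 * hr ^ 2) by (apply Rmult_le_pos; [nra|apply pow2_ge_0]).
      replace (M * (2 * A3 * eps * hr ^ 2 / 6)) with (M * A3 * hr ^ 2 * eps / 3) by field.
      replace (M * A3 / 3 * hr ^ 2) with (M * A3 * hr ^ 2 * 1 / 3) by field.
      apply Rmult_le_compat_r; [lra|]. apply Rmult_le_compat_l; lra. }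
  unfold Cy. assert (0 <= A4 / 6 * hr ^ 2 + 2 * A3 * hr ^ 2) by (assert (0 <= hr ^ 2) by apply pow2_ge_0; nra).
  lra.
Qed.

Lemma local_tau_crude_beyond x hl hr : 0 < hl -> 0 < hr -> 0 <= x - hl -> x + hr <= 1 ->
  (forall z, x - hl < z < x + hr -> layer z <= eps ^ 3) ->
  Rabs (local_tau eps (Defs.sigma (b x * hr / (2 * eps))) (b x) y y1 y2 x hl hr) <= 4 * A2 * eps ^ 2 + M * A2 * hr * eps.
Proof.
  intros Hl Hr H1 H2 Hex. destruct y_derivatives as [F1 [F2 F3]].
  destruct (sigma_facts x hr ltac:(lra) Hr) as [S1 [S2 [S3 [S4 [S5 S6]]]]].
  destruct constants_nonneg2 as [A1p [Cp2p A2p]].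
  eapply Rle_trans.
  { apply (local_tau_crude eps (Defs.sigma (b x * hr / (2 * eps))) (b x) y y1 y2 x hl hr ltac:(lra) ltac:(lra) ltac:(lra) Hl Hr
      ltac:(intros; apply is_derive_y) ltac:(intros; apply is_derive_y1) (F3 _) (F3 _) (2 * A2 * eps)).
    intros z Hz. apply (y_higher_derivatives_bound_beyond z ltac:(lra) (Hex z Hz)). }
  assert (b x * hr * (2 * A2 * eps) / 2 <= M * A2 * hr * eps).
  { replace (b x * hr * (2 * A2 * eps) / 2) with (b x * (A2 * hr * eps)) by field.
    replace (M * A2 * hr * eps) with (M * (A2 * hr * eps)) by ring.
    apply Rmult_le_compat_r; [|lra]. apply Rmult_le_pos; [apply Rmult_le_pos|]; lra. }
  replace (2 * eps * (2 * A2 * eps)) with (4 * A2 * eps ^ 2) by ring. lra.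
Qed.

Lemma local_tau_coarse x H : 0 < H -> 0 <= x - H -> x + H <= 1 ->
  (forall z, x - H < z < x + H -> layer z <= eps ^ 3) ->
  Rabs (local_tau eps (Defs.sigma (b x * H / (2 * eps))) (b x) y y1 y2 x H H) <= Cy * H ^ 2.
Proof.
  intros Hh H1 H2 Hex. destruct y_derivatives as [F1 [F2 F3]].
  destruct (sigma_facts x H ltac:(lra) Hh) as [S1 [S2 [S3 [S4 [S5 S6]]]]].
  destruct constants_nonneg2 as [A1p [Cp2p A2p]]. destruct constants_nonneg3 as [Cp3p [A3p A4p]].
  assert (e2 : 0 < eps ^ 2) by (apply pow_lt; lra).
  eapply Rle_trans.
  { apply (local_tau_uniform eps (Defs.sigma (b x * H / (2 * eps))) (b x) y y1 y2 y3 y4 x H H ltac:(lra) ltac:(lra) ltac:(lra) Hh Hh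
      ltac:(intros; apply is_derive_y) ltac:(intros; apply is_derive_y1) (F3 _) (F3 _) (2 * A3 * eps) (2 * A4) (b x * H / (2 * eps))); auto.
    - intros z Hz. apply is_derive_y2. lra.
    - intros z Hz. apply is_derive_y3. lra.
    - intros z Hz. apply (y_higher_derivatives_bound_beyond z ltac:(lra) (Hex z Hz)).
    - intros z Hz. apply (y_higher_derivatives_bound_beyond z ltac:(lra) (Hex z Hz)). }
  pose proof (y_higher_derivatives_bound_beyond x ltac:(lra) (Hex x ltac:(lra))) as [R2 _].
  set (rho := b x * H / (2 * eps)) in *.
  assert (T1 : eps * (4 * rho ^ 2) * Rabs (y2 x) <= 2 * M * M * A2 * H ^ 2).
  { apply Rle_trans with (eps * (M * M * H ^ 2 / eps ^ 2) * (2 * A2 * eps)).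
    - apply Rmult_le_compat; [apply Rmult_le_pos; [lra|apply Rmult_le_pos; [lra|apply pow2_ge_0]]|apply Rabs_pos| |auto].
      apply Rmult_le_compat_l; lra.
    - right. field. lra. }
  assert (T2 : eps * Defs.sigma rho * (2 * A4 * H ^ 2 / 12) <= A4 / 6 * H ^ 2).
  { assert (0 <= 2 * A4 * H ^ 2 / 12) by (apply Rdiv_le_0_compat; [apply Rmult_le_pos; [|apply pow2_ge_0]|]; lra).
    apply Rle_trans with (1 * 1 * (2 * A4 * H ^ 2 / 12)).
    - apply Rmult_le_compat_r; auto. apply Rmult_le_compat; lra.
    - right. field. }
  assert (T3 : b x * (2 * A3 * eps * H ^ 2 / 6) <= M * A3 / 3 * H ^ 2).
  { assert (0 <= 2 * A3 * eps * H ^ 2 / 6) by (apply Rdiv_le_0_compat; [apply Rmult_le_pos; [apply Rmult_le_pos|apply pow2_ge_0]|]; lra).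
    apply Rle_trans with (M * (2 * A3 * eps * H ^ 2 / 6)).
    - apply Rmult_le_compat_r; lra.
    - assert (0 <= M * A3 * H ^ 2) by (apply Rmult_le_pos; [nra|apply pow2_ge_0]).
      replace (M * (2 * A3 * eps * H ^ 2 / 6)) with (M * A3 * H ^ 2 * eps / 3) by field.
      replace (M * A3 / 3 * H ^ 2) with (M * A3 * H ^ 2 * 1 / 3) by field.
      apply Rmult_le_compat_r; [lra|]. apply Rmult_le_compat_l; lra. }
  unfold Cy. assert (0 <= 2 * A3 * H ^ 2) by (assert (0 <= H ^ 2) by apply pow2_ge_0; nra).
  lra.
Qed.

Variables (a Q : R) (N J : nat).
Hypotheses (Ha : 3 < a) (HQ : 0 < Q < 1) (HJQ : INR J = Q * INR N) (HJa : a / (a - 3) <= INR J)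
  (HJ1 : (1 <= J)%nat) (HJN : (J < N)%nat) (Hxi : xi_tr a eps beta (/ eps) <= Q).

Let xi := xi_tr a eps beta (/ eps).
Let h := xi / INR J.
Let H := (1 - xi) / INR (N - J).

Definition Iq := 1 / (1 - Q).
Definition Ca := Cy * (a / (beta * Q)) ^ 2.
Definition Cb := Cy * Iq ^ 2 + 2 * A3 / 3 * (1 + Iq) + 4 * A2 + M * A2 * Iq.
Definition Cfin := Ca + Cb.

Lemma Iq_ge_1 : 1 <= Iq.
Proof.
  unfold Iq. apply (Rmult_le_reg_l (1 - Q)); [lra|].
  replace ((1 - Q) * (1 / (1 - Q))) with 1 by (field; lra). lra.
Qed.

Lemma Ca_Cb_nonneg : 0 <= Ca /\ 0 <= Cb.
Proof.
  destruct constants_nonneg2 as [A1p [Cp2p A2p]]. destruct constants_nonneg3 as [Cp3p [A3p A4p]].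
  pose proof Iq_ge_1. pose proof Cy_pos. assert (0 <= Iq ^ 2) by apply pow2_ge_0.
  split; [unfold Ca; apply Rmult_le_pos; [auto|apply pow2_ge_0]|].
  assert (0 <= Cy * Iq ^ 2) by (apply Rmult_le_pos; lra).
  assert (0 <= 2 * A3 / 3 * (1 + Iq)) by (apply Rmult_le_pos; lra).
  assert (0 <= M * A2 * Iq) by (apply Rmult_le_pos; nra). unfold Cb. lra.
Qed.

Lemma INR_N_pos : 0 < INR N.
Proof. apply lt_0_INR. lia. Qed.

Lemma ln_inv_eps_pos : 0 < ln (/ eps).
Proof.
  rewrite ln_Rinv by lra. assert (ln eps < 0) by (rewrite <- ln_1; apply ln_increasing; lra). lra.
Qed.

Lemma xi_pos : 0 < xi.
Proof.
  pose proof ln_inv_eps_pos. unfold xi, xi_tr.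
  apply Rmult_lt_0_compat; [apply Rdiv_lt_0_compat; [apply Rmult_lt_0_compat|]|]; lra.
Qed.

Lemma step_fine_J : INR J * h = xi.
Proof. pose proof (lt_0_INR J ltac:(lia)). unfold h. field. lra. Qed.

Lemma step_fine_pos : 0 < h.
Proof. pose proof xi_pos. pose proof (lt_0_INR J ltac:(lia)). apply Rdiv_lt_0_compat; lra. Qed.

Lemma step_fine_le : h <= / INR N.
Proof.
  pose proof INR_N_pos. unfold h. rewrite HJQ. apply (Rmult_le_reg_l (Q * INR N)); [nra|].
  replace (Q * INR N * (xi / (Q * INR N))) with xi by (field; lra).
  replace (Q * INR N * / INR N) with Q by (field; lra). exact Hxi.
Qed.

Lemma step_coarse_pos : 0 < H.
Proof. pose proof (lt_0_INR (N - J) ltac:(lia)). apply Rdiv_lt_0_compat; unfold xi; lra. Qed.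

Lemma step_coarse_total : INR (N - J) * H = 1 - xi.
Proof. pose proof (lt_0_INR (N - J) ltac:(lia)). unfold H. field. lra. Qed.

Lemma step_coarse_le : H <= Iq * / INR N.
Proof.
  pose proof INR_N_pos. pose proof xi_pos.
  assert (NJ : INR (N - J) = (1 - Q) * INR N) by (rewrite minus_INR by lia; lra).
  unfold H, Iq. rewrite NJ. apply (Rmult_le_reg_l ((1 - Q) * INR N)); [nra|].
  replace ((1 - Q) * INR N * ((1 - xi) / ((1 - Q) * INR N))) with (1 - xi) by (field; lra).
  replace ((1 - Q) * INR N * (1 / (1 - Q) * / INR N)) with 1 by (field; lra). lra.
Qed.

Lemma step_fine_over_eps : (h / eps) ^ 2 = (a / (beta * Q)) ^ 2 * ((ln eps) ^ 2 * / INR N ^ 2).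
Proof.
  pose proof INR_N_pos. unfold h, xi, xi_tr. rewrite ln_Rinv, HJQ by lra. field. repeat split; lra.
Qed.

(* The transition point is placed where layer = eps^a; a > 3 leaves room for one fine step. *)
Lemma layer_small_beyond z : xi - h <= z -> layer z <= eps ^ 3.
Proof.
  intros Hz. pose proof ln_inv_eps_pos. pose proof (lt_0_INR J ltac:(lia)).
  set (L := ln (/ eps)) in *. unfold layer.
  assert (E3 : eps ^ 3 = exp (- (3 * L))).
  { unfold L. rewrite ln_Rinv by lra. replace (- (3 * - ln eps)) with (ln eps + (ln eps + ln eps)) by ring.
    rewrite !exp_plus, exp_ln by lra. ring. }
  rewrite E3. apply exp_le_compat.
  assert (beta * (xi - h) / eps <= beta * z / eps).
  { unfold Rdiv. apply Rmult_le_compat_r; [left; apply Rinv_0_lt_compat; lra|]. apply Rmult_le_compat_l; lra. }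
  assert (Ebx : beta * (xi - h) / eps = a * L * (1 - 1 / INR J)) by (unfold h, xi, xi_tr; fold L; field; lra).
  assert (3 <= a * (1 - 1 / INR J)).
  { assert (a / INR J <= a - 3).
    { apply (Rmult_le_reg_l (INR J)); auto. replace (INR J * (a / INR J)) with a by (field; lra).
      apply (Rmult_le_reg_r (/ (a - 3))). apply Rinv_0_lt_compat; lra.
      replace (INR J * (a - 3) * / (a - 3)) with (INR J) by (field; lra). unfold Rdiv in HJa. lra. }
    replace (a * (1 - 1 / INR J)) with (a - a / INR J) by (field; lra). lra. }
  replace (- beta * z / eps) with (- (beta * z / eps)) by (field; lra). nra.
Qed.

Lemma crude_beyond_le hr : 0 < hr -> hr <= Iq * / INR N -> eps <= / INR N ->
  4 * A2 * eps ^ 2 + M * A2 * hr * eps <= Cb * (eps * / INR N).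
Proof.
  intros Hr1 Hr2 He2. destruct constants_nonneg2 as [A1p [Cp2p A2p]].
  destruct constants_nonneg3 as [Cp3p [A3p A4p]]. pose proof Iq_ge_1. pose proof Cy_pos.
  unfold Cb. assert (eps ^ 2 <= eps * / INR N) by (simpl; nra).
  assert (M * A2 * hr * eps <= M * A2 * Iq * (eps * / INR N)).
  { replace (M * A2 * hr * eps) with (M * A2 * eps * hr) by ring.
    replace (M * A2 * Iq * (eps * / INR N)) with (M * A2 * eps * (Iq * / INR N)) by ring.
    apply Rmult_le_compat_l; [|auto]. apply Rmult_le_pos; [nra|lra]. }
  assert (0 <= Cy * Iq ^ 2 * (eps * / INR N)) by (apply Rmult_le_pos; [apply Rmult_le_pos; [auto|apply pow2_ge_0]|nra]).
  assert (0 <= 2 * A3 / 3 * (1 + Iq) * (eps * / INR N)) by (apply Rmult_le_pos; [|nra]; apply Rmult_le_pos; lra).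
  nra.
Qed.

Lemma step_coarse_sq_le : H ^ 2 <= Iq ^ 2 * (/ INR N * / INR N).
Proof. pose proof step_coarse_le. pose proof step_coarse_pos. simpl. nra. Qed.

Lemma tau_y_bound_fine i : (1 <= i < J)%nat ->
  Rabs (tau eps b (mesh xi N J) y i) <= Cfin * ((ln eps) ^ 2 * / (INR N) ^ 2).
Proof.
  intros Hi. destruct y_derivatives as [F1 [F2 _]]. pose proof step_fine_pos. pose proof step_fine_J.
  rewrite (tau_local_tau eps b _ y y1 y2 i ltac:(lia) F1 F2).
  rewrite (hs_fine xi N J i), (hs_fine xi N J (S i)), (mesh_fine xi N J i) by lia.
  assert (I1 : 1 <= INR i) by (replace 1 with (INR 1) by reflexivity; apply le_INR; lia).
  assert (I2 : INR i + 1 <= INR J) by (rewrite <- S_INR; apply le_INR; lia).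
  fold h. assert (xi < 1) by (unfold xi; lra).
  eapply Rle_trans; [apply local_tau_fine; nra|].
  rewrite step_fine_over_eps. destruct Ca_Cb_nonneg as [_ Cb0]. pose proof INR_N_pos.
  assert (0 <= Cb * ((ln eps) ^ 2 * / INR N ^ 2)).
  { apply Rmult_le_pos; [auto|apply Rmult_le_pos; [apply pow2_ge_0|left; apply Rinv_0_lt_compat, pow_lt; lra]]. }
  unfold Cfin, Ca. lra.
Qed.

Lemma tau_y_bound_transition :
  Rabs (tau eps b (mesh xi N J) y J) <= Cfin * (Rmin eps (/ INR N) * / INR N + eps ^ 2 * / INR N).
Proof.
  destruct y_derivatives as [F1 [F2 _]]. destruct Ca_Cb_nonneg as [Ca0 Cb0].
  destruct constants_nonneg2 as [A1p [Cp2p A2p]]. destruct constants_nonneg3 as [Cp3p [A3p A4p]].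
  pose proof step_fine_pos. pose proof step_coarse_pos. pose proof step_fine_le. pose proof step_coarse_le.
  pose proof step_coarse_sq_le. pose proof Iq_ge_1. pose proof INR_N_pos. pose proof Cy_pos.
  assert (0 < / INR N) by (apply Rinv_0_lt_compat; lra). assert (0 <= eps ^ 2) by apply pow2_ge_0.
  rewrite (tau_local_tau eps b _ y y1 y2 J ltac:(lia) F1 F2).
  rewrite (hs_fine xi N J J), (hs_coarse xi N J (S J)), (mesh_fine xi N J J) by lia.
  fold h H. rewrite step_fine_J.
  assert (xh : 0 <= xi - h).
  { assert (1 <= INR J) by (replace 1 with (INR 1) by reflexivity; apply le_INR; lia).
    rewrite <- step_fine_J. nra. }
  assert (xH : xi + H <= 1).
  { pose proof step_coarse_total.
    assert (1 <= INR (N - J)) by (replace 1 with (INR 1) by reflexivity; apply le_INR; lia). nra. }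
  assert (Hex : forall z, xi - h < z < xi + H -> layer z <= eps ^ 3) by (intros z Hz; apply layer_small_beyond; lra).
  destruct (Rle_dec eps (/ INR N)) as [Hs|Hs].
  - rewrite Rmin_left by lra.
    eapply Rle_trans; [apply local_tau_crude_beyond; auto|].
    eapply Rle_trans; [apply crude_beyond_le; auto|].
    assert (0 <= Ca * (eps * / INR N + eps ^ 2 * / INR N)) by (apply Rmult_le_pos; nra).
    assert (0 <= Cb * (eps ^ 2 * / INR N)) by (apply Rmult_le_pos; nra).
    unfold Cfin. nra.
  - rewrite Rmin_right by lra.
    eapply Rle_trans; [apply local_tau_transition; auto|].
    assert (Cy * H ^ 2 <= Cy * Iq ^ 2 * (/ INR N * / INR N)) by (rewrite Rmult_assoc; apply Rmult_le_compat_l; auto).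
    assert (2 * A3 / 3 * eps ^ 2 * (h + H) <= 2 * A3 / 3 * (1 + Iq) * (eps ^ 2 * / INR N)).
    { replace (2 * A3 / 3 * (1 + Iq) * (eps ^ 2 * / INR N)) with (2 * A3 / 3 * eps ^ 2 * ((1 + Iq) * / INR N)) by ring.
      apply Rmult_le_compat_l; [apply Rmult_le_pos; lra|nra]. }
    unfold Cfin, Cb.
    set (X1 := / INR N * / INR N) in *. set (X2 := eps ^ 2 * / INR N) in *.
    assert (0 <= X1) by (unfold X1; nra). assert (0 <= X2) by (unfold X2; nra).
    assert (0 <= Ca * (X1 + X2)) by (apply Rmult_le_pos; lra).
    assert (0 <= Cy * Iq ^ 2 * X2) by (apply Rmult_le_pos; [apply Rmult_le_pos; [lra|apply pow2_ge_0]|lra]).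
    assert (0 <= 2 * A3 / 3 * (1 + Iq) * X1) by (apply Rmult_le_pos; [apply Rmult_le_pos|]; lra).
    assert (0 <= M * A2 * Iq) by (apply Rmult_le_pos; [apply Rmult_le_pos|]; lra).
    assert (0 <= (4 * A2 + M * A2 * Iq) * (X1 + X2)) by (apply Rmult_le_pos; lra).
    lra.
Qed.

Lemma tau_y_bound_coarse i : (J < i <= N - 1)%nat ->
  Rabs (tau eps b (mesh xi N J) y i) <= Cfin * (Rmin eps (/ INR N) * / INR N).
Proof.
  intros Hi. destruct y_derivatives as [F1 [F2 _]]. destruct Ca_Cb_nonneg as [Ca0 Cb0].
  destruct constants_nonneg2 as [A1p [Cp2p A2p]]. destruct constants_nonneg3 as [Cp3p [A3p A4p]].
  pose proof step_fine_pos. pose proof step_coarse_pos. pose proof step_fine_le. pose proof step_coarse_le.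
  pose proof step_coarse_sq_le. pose proof Iq_ge_1. pose proof INR_N_pos. pose proof Cy_pos.
  assert (0 < / INR N) by (apply Rinv_0_lt_compat; lra).
  rewrite (tau_local_tau eps b _ y y1 y2 i ltac:(lia) F1 F2).
  rewrite (hs_coarse xi N J i), (hs_coarse xi N J (S i)), (mesh_coarse xi N J i) by lia.
  fold H.
  pose proof step_coarse_total as NJH.
  assert (I1 : 1 <= INR (i - J)) by (replace 1 with (INR 1) by reflexivity; apply le_INR; lia).
  assert (I2 : INR (i - J) + 1 <= INR (N - J)) by (rewrite <- S_INR; apply le_INR; lia).
  assert (xh : 0 <= xi + INR (i - J) * H - H) by (pose proof xi_pos; nra).
  assert (xH : xi + INR (i - J) * H + H <= 1) by nra.
  assert (Hex : forall z, xi + INR (i - J) * H - H < z < xi + INR (i - J) * H + H -> layer z <= eps ^ 3)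
    by (intros z Hz; apply layer_small_beyond; nra).
  destruct (Rle_dec eps (/ INR N)) as [Hs|Hs].
  - rewrite Rmin_left by lra.
    eapply Rle_trans; [apply local_tau_crude_beyond; auto|].
    eapply Rle_trans; [apply crude_beyond_le; auto|].
    unfold Cfin. assert (0 <= Ca * (eps * / INR N)) by (apply Rmult_le_pos; [auto|nra]). nra.
  - rewrite Rmin_right by lra.
    eapply Rle_trans; [apply local_tau_coarse; auto|].
    unfold Cfin, Cb.
    assert (0 <= / INR N * / INR N) by nra.
    assert (0 <= Ca * (/ INR N * / INR N)) by (apply Rmult_le_pos; auto).
    assert (Cy * H ^ 2 <= Cy * Iq ^ 2 * (/ INR N * / INR N)) by (rewrite Rmult_assoc; apply Rmult_le_compat_l; auto).
    assert (0 <= M * A2 * Iq) by (apply Rmult_le_pos; [apply Rmult_le_pos|]; lra).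
    assert (0 <= (2 * A3 / 3 * (1 + Iq) + 4 * A2 + M * A2 * Iq) * (/ INR N * / INR N)) by (apply Rmult_le_pos; [nra|auto]).
    lra.
Qed.

Lemma tau_y_bound i : (1 <= i <= N - 1)%nat ->
  Rabs (tau eps b (mesh xi N J) y i) <=
  Cfin * (if (i <? J)%nat then (ln eps) ^ 2 * / (INR N) ^ 2
          else if (i =? J)%nat then Rmin eps (/ INR N) * / INR N + eps ^ 2 * / INR N
          else Rmin eps (/ INR N) * / INR N).
Proof.
  intros Hi. destruct (Nat.ltb_spec i J) as [HiJ|HiJ]; [apply tau_y_bound_fine; lia|].
  destruct (Nat.eqb_spec i J) as [->|HeJ]; [apply tau_y_bound_transition|].
  apply tau_y_bound_coarse; lia.
Qed.

End TruncationError.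

Lemma mesh_threshold a Q : 3 < a -> 0 < Q < 1 ->
  exists N0 : nat, forall N J : nat, (N0 <= N)%nat -> INR J = Q * INR N ->
    a / (a - 3) <= INR J /\ (1 <= J)%nat /\ (J < N)%nat.
Proof.
  intros Ha HQ. set (X := (a / (a - 3) + 1) / Q).
  assert (aa : 0 <= a / (a - 3)) by (apply Rdiv_le_0_compat; lra).
  assert (X0 : 0 < X) by (apply Rdiv_lt_0_compat; lra).
  destruct (INR_archimed 1 X ltac:(lra)) as [N0 HN0].
  exists N0. intros N J HN HJQ.
  assert (INX : X < INR N) by (apply Rlt_le_trans with (INR N0); [lra|apply le_INR; auto]).
  assert (Hq : a / (a - 3) + 1 <= INR J).
  { rewrite HJQ. apply (Rmult_le_reg_r (/ Q)). apply Rinv_0_lt_compat; lra.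
    replace (Q * INR N * / Q) with (INR N) by (field; lra). unfold X, Rdiv in INX. lra. }
  assert (Np : 0 < INR N) by lra.
  repeat split; [lra|apply INR_le; simpl; lra|apply INR_lt; rewrite HJQ; nra].
Qed.

Theorem lemma4 :
  forall (b c f : R -> R) (beta Q a : R),
    CkR 4 b -> CkR 4 c -> CkR 4 f ->
    0 < beta -> (forall x, 0 <= x <= 1 -> b x > beta) ->
    (forall x, 0 <= x <= 1 -> 0 <= c x) ->
    0 < Q < 1 -> 3 < a ->
  exists (N0 : nat) (C : R),
    forall (eps : R) (N J : nat) (u u0 : R -> R),
      0 < eps < 1 ->
      (N0 <= N)%nat ->
      INR J = Q * INR N ->
      xi_tr a eps beta (/ eps) <= Q ->
      (forall x, ex_derive u x) -> (forall x, ex_derive (Derive u) x) ->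
      (forall x, 0 < x < 1 ->
         - eps * Derive_n u 2 x - b x * Derive u x + c x * u x = f x) ->
      u 0 = 0 -> u 1 = 0 ->
      (forall x, ex_derive u0 x) -> (forall x, ex_derive (Derive u0) x) ->
      (forall x, 0 < x < 1 -> - b x * Derive u0 x + c x * u0 x = f x) ->
      u0 1 = 0 ->
      let v := fun x => - (eps * Derive u 0 / b 0) * exp (- b 0 * x / eps) in
      let y := fun x => u x - u0 x - v x in
      let x := mesh (xi_tr a eps beta (/ eps)) N J in
      forall i : nat, (1 <= i <= N - 1)%nat ->
        Rabs (tau eps b x y i) <=
        C * (if (i <? J)%nat then (ln eps) ^ 2 * / (INR N) ^ 2
             else if (i =? J)%nat then
               Rmin eps (/ INR N) * / INR N + eps ^ 2 * / INR N
             else Rmin eps (/ INR N) * / INR N).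
Proof.
  intros b c f beta Q a Hb Hc Hf Hbeta Hbpos Hcpos HQ Ha.
  destruct (lower_bound_margin b beta) as [d [Hd Hbmin]]; [|exact Hbpos|].
  { intros x _. apply (is_derive_continuity_pt _ _ (Derive_n b 1 x)), (CkR4_is_derive b 0); auto. }
  destruct (CkR4_common_bound b c f beta Hb Hc Hf) as [M [HMbeta [HM1 [HbM [HcM HfM]]]]].
  destruct (mesh_threshold a Q Ha HQ) as [N0 HN0].
  exists N0, (Cfin beta d M a Q).
  intros eps N J u u0 He HN HJQ Hxi Hud Hudd Hode Hu0 Hu1 Hu0d Hu0dd Hode0 Hu01 v y x i Hi.
  destruct (HN0 N J HN HJQ) as [HJa [HJ1 HJN]].
  eapply (tau_y_bound b c f beta d M); eassumption.
Qed.
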